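(* Let $N=1$ and $p>1$. Then the equation $-u''=|u|^{p-1}u+M|u'|^{\frac{2p}{p+1}}$ admits a ground state $u$ if and only if $M\le-\mu^*(1)$. Such a ground state satisfies $u(r)\sim U_{2,M}(r)$ as $r\to\infty$. Furthermore, if $M<-\mu^*(1)$ there exists a positive singular solution $u$ on $(0,\infty)$ which satisfies $u(r)\sim U_{1,M}(r)$ as $r\to0$ and $u(r)\sim U_{2,M}(r)$ as $r\to\infty$.
   Context: A ground state is a nonnegative $u\in C^2([0,\infty))$ with $u'(0)=0$ solving $-u''=|u|^{p-1}u+M|u'|^{\frac{2p}{p+1}}$ on $(0,\infty)$. Let $\mu^*(1)=(p+1)\left(\frac{p+1}{2p}\right)^{\frac{p}{p+1}}$ and $K=-\frac{p+1}{p-1}$. For $M<-\mu^*(1)$ the equation $X^{p-1}+M\left(\frac{2}{p-1}\right)^{\frac{2p}{p+1}}X^{\frac{p-1}{p+1}}-\frac{2K}{p-1}=0$ has exactly two positive roots $X_{1,M}<X_{2,M}$, and for $M=-\mu^*(1)$ a unique positive root, denoted $X_{1,M}=X_{2,M}$. Set $U_{j,M}(r)=X_{j,M}r^{-\frac{2}{p-1}}$. $f\sim g$ means $f/g\to1$. *)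

From Stdlib Require Import Reals.
From Coquelicot Require Import Coquelicot.
Open Scope R_scope.

(* x^a for x >= 0 and a > 0, with the convention 0^a = 0
   (Stdlib's Rpower 0 a = 1, which is wrong for our purposes). *)
Definition pw (x a : R) : R := if Rlt_dec 0 x then Rpower x a else 0.

Definition mu_star (p : R) : R :=
  (p + 1) * Rpower ((p + 1) / (2 * p)) (p / (p + 1)).

Definition Kc (p : R) : R := - (p + 1) / (p - 1).

Definition is_pos_root (p M X : R) : Prop :=
  0 < X /\
  Rpower X (p - 1)
  + M * Rpower (2 / (p - 1)) (2 * p / (p + 1)) * Rpower X ((p - 1) / (p + 1))
  - 2 * Kc p / (p - 1) = 0.

Definition is_X1 (p M X : R) : Prop :=
  is_pos_root p M X /\ forall Y, is_pos_root p M Y -> X <= Y.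
Definition is_X2 (p M X : R) : Prop :=
  is_pos_root p M X /\ forall Y, is_pos_root p M Y -> Y <= X.

Definition U_of (p X r : R) : R := X * Rpower r (- (2 / (p - 1))).

Definition solves_at (p M : R) (u : R -> R) (r : R) : Prop :=
  - Derive (Derive u) r
  = pw (Rabs (u r)) (p - 1) * u r + M * pw (Rabs (Derive u r)) (2 * p / (p + 1)).

Definition C2_at (u : R -> R) (r : R) : Prop :=
  ex_derive u r /\ ex_derive (Derive u) r /\ continuous (Derive (Derive u)) r.

(* Ground state: u in C^2([0,oo)) (represented as the restriction of a C^2
   function on R), u'(0) = 0, u >= 0 on [0,oo), u not identically zero on
   [0,oo), solving the ODE on (0,oo). *)
Definition is_ground_state (p M : R) (u : R -> R) : Prop :=
  (forall r, C2_at u r) /\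
  Derive u 0 = 0 /\
  (forall r, 0 <= r -> 0 <= u r) /\
  (exists r, 0 <= r /\ u r <> 0) /\
  (forall r, 0 < r -> solves_at p M u r).

Definition is_pos_sol_0inf (p M : R) (u : R -> R) : Prop :=
  forall r, 0 < r -> 0 < u r /\ C2_at u r /\ solves_at p M u r.

Definition equiv_infty (f g : R -> R) : Prop :=
  is_lim (fun r => f r / g r) p_infty (Finite 1).
Definition equiv_0 (f g : R -> R) : Prop :=
  filterlim (fun r => f r / g r) (at_right 0) (locally 1).

From Stdlib Require Import Reals Lra Psatz Classical ClassicalEpsilon.
From Coquelicot Require Import Coquelicot.
Open Scope R_scope.

(* With [y = ln u] and [phi = - u' u^(-(p+1)/2)] the equation becomes the autonomous system
   [y' = - phi e^((p-1) y/2)], [phi' = e^((p-1) y/2) G(phi)], where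
   [G(phi) = 1 + (p+1)/2 phi^2 + M phi^(2p/(p+1))].  The self-similar solutions [U_X] are the
   equilibria [phi = const], and [X] solves the algebraic equation iff [G] vanishes at the
   corresponding [phi]; larger [X] means smaller [phi].  The minimum of [G] on [(0, oo)] is
   [1 - (-M / mu_star)^(p+1)], so [G] has a positive zero iff [M <= - mu_star].

   A ground state starts at [phi = 0], and [phi] increases as long as [G(phi) > 0].  If [G]
   had no zero, either [phi] would stay bounded with [G(phi)] bounded below, and then [phi]
   grows at least logarithmically, or eventually [G(phi) >= (p/2) phi^2], and then
   [sqrt u] decreases at a uniform rate and becomes negative.  Otherwise [phi] cannot reach
   the first zero [phi1] of [G] in finite time, since [G] vanishes only linearly there, so it
   converges to [phi1] and [u ~ U_{2,M}].

   Conversely, trajectories are obtained by quadrature in [phi]: on [(-phi1, phi1)] (where [G]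
   is even and positive) this gives a ground state, and between the two zeros [phi1 < phi2]
   (where [G < 0]) it gives the singular solution, with [phi -> phi2] at [r = 0] and
   [phi -> phi1] at [r = oo]. *)

(** * Real-analysis tools *)

Lemma continuity_pt_eps (f : R -> R) (x : R) : continuity_pt f x ->
  forall eps, 0 < eps -> exists del, 0 < del /\
    forall y, Rabs (y - x) < del -> Rabs (f y - f x) < eps.
Proof.
  intros H eps He. destruct (H eps He) as [d [Hd Hy]].
  exists d; split; [lra|]. intros y Hyx.
  destruct (Req_dec y x) as [-> | Hne].
  - rewrite Rminus_diag, Rabs_R0; lra.
  - apply (Hy y). split; [split; [exact I| auto] | exact Hyx].
Qed.

Lemma eps_continuity_pt (f : R -> R) (x : R) :
  (forall eps, 0 < eps -> exists del, 0 < del /\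
    forall y, Rabs (y - x) < del -> Rabs (f y - f x) < eps) -> continuity_pt f x.
Proof.
  intros H eps He. destruct (H eps He) as [d [Hd Hy]].
  exists d; split; [lra|]. intros y [_ Hyx]. apply Hy. exact Hyx.
Qed.

Lemma is_derive_continuity_pt (f : R -> R) (x l : R) :
  is_derive f x l -> continuity_pt f x.
Proof.
  intro H. apply continuity_pt_filterlim. apply (ex_derive_continuous f x).
  exists l; exact H.
Qed.

Lemma continuity_pt_eq_right (f g : R -> R) (x : R) :
  continuity_pt f x -> continuity_pt g x ->
  (forall r, x < r -> f r = g r) -> f x = g x.
Proof.
  intros Hf Hg E.
  assert (Hr : forall h, continuity_pt h x -> filterlim h (at_right x) (locally (h x))).
  { intros h Hh. apply continuity_pt_filterlim in Hh.
    intros P HP. apply Hh in HP. destruct HP as [d Hd]. exists d. intros y Hy _. now apply Hd. }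
  apply (filterlim_locally_unique (F := at_right x) f); [exact (Hr f Hf) |].
  apply (filterlim_ext_loc g); [| exact (Hr g Hg)].
  exists (mkposreal 1 Rlt_0_1). intros r _ Hxr. symmetry. now apply E.
Qed.

Lemma is_derive_val (f : R -> R) (x l l' : R) : l = l' -> is_derive f x l -> is_derive f x l'.
Proof. now intros ->. Qed.

Lemma is_derive_Rmult (f g : R -> R) x lf lg :
  is_derive f x lf -> is_derive g x lg ->
  is_derive (fun t => f t * g t) x (lf * g x + f x * lg).
Proof. intros Hf Hg. apply (is_derive_mult f g); auto. intros; apply Rmult_comm. Qed.

Lemma is_derive_Rcomp (f g : R -> R) x lf lg :
  is_derive f (g x) lf -> is_derive g x lg -> is_derive (fun t => f (g t)) x (lf * lg).
Proof. intros Hf Hg. rewrite Rmult_comm. apply (is_derive_comp f g); auto. Qed.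

Lemma is_derive_ln_comp (f : R -> R) r df : 0 < f r -> is_derive f r df ->
  is_derive (fun t => ln (f t)) r (df / f r).
Proof.
  intros Hp Hd. apply (is_derive_val _ _ (/ f r * df)); [unfold Rdiv; ring|].
  apply is_derive_Rcomp; auto. auto_derive; [lra | field; lra].
Qed.

Lemma is_derive_exp_comp (f : R -> R) r df c : is_derive f r df ->
  is_derive (fun t => exp (c * f t)) r (c * df * exp (c * f r)).
Proof.
  intros Hd. apply (is_derive_val _ _ (c * exp (c * f r) * df)); [ring|].
  apply (is_derive_Rcomp (fun z => exp (c * z)) f); auto. auto_derive; auto; ring.
Qed.

Lemma le_of_derive_nonneg (f df : R -> R) (x y : R) : x <= y ->
  (forall t, x < t < y -> is_derive f t (df t)) ->
  (forall t, x <= t <= y -> continuity_pt f t) ->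
  (forall t, x < t < y -> 0 <= df t) -> f x <= f y.
Proof.
  intros Hxy Hd Hc Hpos.
  (* [Rmax 0 df] agrees with [df] inside, and is nonnegative also at the endpoints
     where the mean value point may fall *)
  destruct (MVT_gen f x y (fun t => Rmax 0 (df t))) as [c [_ Hc2]].
  - intros t. rewrite Rmin_left, Rmax_right by lra. intro Ht.
    rewrite Rmax_right by (apply Hpos; lra). apply Hd; lra.
  - intros t. rewrite Rmin_left, Rmax_right by lra. apply Hc.
  - assert (0 <= Rmax 0 (df c)) by apply Rmax_l.
    assert (0 <= Rmax 0 (df c) * (y - x)) by (apply Rmult_le_pos; lra). lra.
Qed.

Lemma lt_of_derive_pos (f df : R -> R) (x y : R) : x < y ->
  (forall t, x < t < y -> is_derive f t (df t)) ->
  (forall t, x <= t <= y -> continuity_pt f t) ->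
  (forall t, x < t < y -> 0 < df t) -> f x < f y.
Proof.
  intros Hxy Hd Hc Hpos.
  set (a := x + (y - x) / 3). set (b := y - (y - x) / 3).
  assert (Hab : x < a < b /\ b < y) by (unfold a, b; lra).
  assert (Hxa : f x <= f a).
  { apply (le_of_derive_nonneg f df); try (intros; apply Hd || apply Hc || apply Rlt_le, Hpos; lra); lra. }
  assert (Hby : f b <= f y).
  { apply (le_of_derive_nonneg f df); try (intros; apply Hd || apply Hc || apply Rlt_le, Hpos; lra); lra. }
  destruct (MVT_gen f a b df) as [c [Hc1 Hc2]].
  - intros t. rewrite Rmin_left, Rmax_right by lra. intro; apply Hd; lra.
  - intros t. rewrite Rmin_left, Rmax_right by lra. intro; apply Hc; lra.
  - rewrite Rmin_left, Rmax_right in Hc1 by lra.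
    assert (0 < df c * (b - a)) by (apply Rmult_lt_0_compat; [apply Hpos|]; lra). lra.
Qed.

Lemma increment_le_of_derive_le (f g df dg : R -> R) (x y : R) : x <= y ->
  (forall t, x < t < y -> is_derive f t (df t)) ->
  (forall t, x < t < y -> is_derive g t (dg t)) ->
  (forall t, x <= t <= y -> continuity_pt f t) ->
  (forall t, x <= t <= y -> continuity_pt g t) ->
  (forall t, x < t < y -> df t <= dg t) -> f y - f x <= g y - g x.
Proof.
  intros Hxy Hf Hg Hcf Hcg Hle.
  cut (g x - f x <= g y - f y); [lra|].
  apply (le_of_derive_nonneg (fun t => g t - f t) (fun t => dg t - df t) x y Hxy).
  - intros t Ht. apply (is_derive_minus g f); auto.
  - intros t Ht. apply continuity_pt_minus; auto.
  - intros t Ht. specialize (Hle t Ht). lra.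
Qed.

Lemma derive_neg_sign_near (f : R -> R) (x l : R) : is_derive f x l -> l < 0 ->
  exists del, 0 < del /\ (forall y, x < y < x + del -> f y < f x) /\
                         (forall y, x - del < y < x -> f x < f y).
Proof.
  intros Hd Hl. apply is_derive_Reals in Hd.
  destruct (Hd (- l / 2)) as [[d Hdp] Hdd]; [lra|].
  exists d; split; [exact Hdp|].
  assert (key : forall y, 0 < Rabs (y - x) < d -> (f y - f x) / (y - x) < l / 2).
  { intros y Hy. specialize (Hdd (y - x)).
    replace (x + (y - x)) with y in Hdd by ring.
    assert (Hyx : y - x <> 0) by (intro E; rewrite E, Rabs_R0 in Hy; lra).
    specialize (Hdd Hyx (proj2 Hy)). apply Rabs_def2 in Hdd. lra. }
  split; intros y Hy; assert (Hk := key y);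
    [rewrite Rabs_right in Hk by lra | rewrite Rabs_left in Hk by lra];
    specialize (Hk ltac:(lra));
    set (q := (f y - f x) / (y - x)) in Hk;
    assert (E : f y - f x = q * (y - x)) by (unfold q; field; lra); nra.
Qed.

Lemma first_zero (f : R -> R) (a b : R) : a < b ->
  (forall t, a <= t <= b -> continuity_pt f t) -> f a < 0 -> 0 <= f b ->
  exists r1, a < r1 <= b /\ f r1 = 0 /\ forall t, a <= t < r1 -> f t < 0.
Proof.
  intros Hab Hc Ha Hb.
  set (E := fun t => a <= t <= b /\ forall s, a <= s <= t -> f s < 0).
  assert (HEa : E a) by (split; [lra | intros s Hs; replace s with a by lra; exact Ha]).
  destruct (completeness E ltac:(exists b; intros t [Ht _]; lra) (ex_intro _ a HEa))
    as [r1 [Hub Hlub]].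
  assert (Har1 : a <= r1) by (apply Hub; exact HEa).
  assert (Hr1b : r1 <= b) by (apply Hlub; intros t [Ht _]; lra).
  assert (Hbelow : forall s, a <= s < r1 -> f s < 0).
  { intros s Hs. apply NNPP. intros Hns.
    assert (r1 <= s); [|lra]. apply Hlub. intros t [Ht Hneg].
    destruct (Rle_lt_dec t s) as [|Hst]; auto. exfalso. apply Hns, Hneg. lra. }
  pose proof (continuity_pt_eps f r1 (Hc r1 ltac:(lra))) as Hcr.
  destruct (Rtotal_order (f r1) 0) as [Hn|[Hz|Hp]].
  - (* [E] would extend beyond its supremum *)
    destruct (Hcr (- f r1) ltac:(lra)) as [d [Hd Hdd]].
    assert (Hr1b' : r1 < b) by (destruct (Req_dec r1 b) as [->|]; lra).
    set (t1 := Rmin (r1 + d / 2) b).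
    assert (Ht1 : r1 < t1 <= b /\ t1 <= r1 + d / 2).
    { unfold t1. split; [split; [apply Rmin_glb_lt; lra | apply Rmin_r] | apply Rmin_l]. }
    assert (E t1).
    { split; [lra|]. intros s Hs. destruct (Rlt_le_dec s r1); [apply Hbelow; lra|].
      specialize (Hdd s ltac:(rewrite Rabs_right; lra)). apply Rabs_def2 in Hdd. lra. }
    assert (t1 <= r1) by (apply Hub; assumption). lra.
  - exists r1. assert (a <> r1) by (intros ->; lra). repeat split; auto; lra.
  - destruct (Hcr (f r1) Hp) as [d [Hd Hdd]].
    assert (Har1' : a < r1) by (destruct (Req_dec a r1) as [<-|]; lra).
    set (s := Rmax (r1 - d / 2) a).
    assert (Hs : r1 - d / 2 <= s /\ a <= s < r1).
    { unfold s. split; [apply Rmax_l | split; [apply Rmax_r | apply Rmax_lub_lt; lra]]. }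
    specialize (Hdd s ltac:(rewrite Rabs_left; lra)). apply Rabs_def2 in Hdd.
    assert (f s < 0) by (apply Hbelow; lra). lra.
Qed.

Lemma neg_of_no_first_zero (f : R -> R) (x0 : R) :
  (forall r, x0 < r -> continuity_pt f r) ->
  (exists del, 0 < del /\ forall r, x0 < r < x0 + del -> f r < 0) ->
  (forall r1, x0 < r1 -> f r1 = 0 -> (forall r, x0 < r < r1 -> f r < 0) -> False) ->
  forall r, x0 < r -> f r < 0.
Proof.
  intros Hc [del [Hdel Hneg]] Hfirst x Hx.
  destruct (Rlt_le_dec (f x) 0) as [Hlt|Hge]; [exact Hlt|]. exfalso.
  set (a := Rmin (x0 + del / 2) ((x0 + x) / 2)).
  assert (Ha : x0 < a < x /\ a < x0 + del).
  { unfold a. split; [split; [apply Rmin_glb_lt | apply (Rle_lt_trans _ ((x0 + x) / 2)); [apply Rmin_r|]]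
      | apply (Rle_lt_trans _ (x0 + del / 2)); [apply Rmin_l|]]; lra. }
  destruct (first_zero f a x) as [r1 [Hr1 [Hz Hbelow]]]; try lra.
  - intros t Ht. apply Hc. lra.
  - apply Hneg. lra.
  - apply (Hfirst r1); auto; [lra|]. intros r Hr.
    destruct (Rlt_le_dec r a); [apply Hneg; lra | apply Hbelow; lra].
Qed.

Lemma gronwall_zero_iff (E dE : R -> R) C x y : x <= y -> 0 <= C ->
  (forall t, x <= t <= y -> is_derive E t (dE t)) ->
  (forall t, x <= t <= y -> 0 <= E t) ->
  (forall t, x <= t <= y -> Rabs (dE t) <= C * E t) ->
  E x = 0 <-> E y = 0.
Proof.
  intros Hxy HC Hd Hp Hb.
  assert (Hdk : forall k t, x <= t <= y ->
    is_derive (fun t => E t * exp (k * t)) t ((dE t + k * E t) * exp (k * t))).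
  { intros k t Ht. apply (is_derive_val _ _ (dE t * exp (k * t) + E t * (k * exp (k * t)))); [ring|].
    apply (is_derive_Rmult E (fun t => exp (k * t))); [apply Hd; auto | auto_derive; auto; ring]. }
  (* [E exp(-Ct)] is nonincreasing and [E exp(Ct)] is nondecreasing *)
  assert (Hdec : E y * exp (- C * y) <= E x * exp (- C * x)).
  { cut (- (E x * exp (- C * x)) <= - (E y * exp (- C * y))); [lra|].
    apply (le_of_derive_nonneg (fun t => - (E t * exp (- C * t)))
      (fun t => - ((dE t + - C * E t) * exp (- C * t))) x y Hxy).
    - intros t Ht. apply (is_derive_opp (fun t => E t * exp (- C * t))), Hdk; lra.
    - intros t Ht. apply continuity_pt_opp, (is_derive_continuity_pt _ _ _ (Hdk _ t Ht)).
    - intros t Ht. specialize (Hb t ltac:(lra)). apply Rabs_le_between in Hb.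
      pose proof (exp_pos (- C * t)). nra. }
  assert (Hinc : E x * exp (C * x) <= E y * exp (C * y)).
  { apply (le_of_derive_nonneg (fun t => E t * exp (C * t))
      (fun t => (dE t + C * E t) * exp (C * t)) x y Hxy).
    - intros t Ht. apply Hdk; lra.
    - intros t Ht. apply (is_derive_continuity_pt _ _ _ (Hdk _ t Ht)).
    - intros t Ht. specialize (Hb t ltac:(lra)). apply Rabs_le_between in Hb.
      pose proof (exp_pos (C * t)). nra. }
  pose proof (Hp x ltac:(lra)). pose proof (Hp y ltac:(lra)).
  pose proof (exp_pos (- C * x)). pose proof (exp_pos (- C * y)).
  pose proof (exp_pos (C * x)). pose proof (exp_pos (C * y)).
  split; intros Hz; [rewrite Hz in Hdec | rewrite Hz in Hinc]; nra.
Qed.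

Lemma is_derive_RInt_open (f : R -> R) (c al be : R) : al < c < be ->
  (forall t, al < t < be -> continuity_pt f t) ->
  forall t, al < t < be -> is_derive (fun x => RInt f c x) t (f t).
Proof.
  intros Hc Hf t Ht.
  apply (is_derive_RInt f (fun x => RInt f c x) c t).
  - assert (Hd : 0 < Rmin (t - al) (be - t)) by (apply Rmin_glb_lt; lra).
    exists (mkposreal _ Hd). intros b0 Hb0. change (Rabs (b0 - t) < Rmin (t - al) (be - t)) in Hb0.
    assert (Hb1 : Rabs (b0 - t) < t - al) by (eapply Rlt_le_trans; [apply Hb0| apply Rmin_l]).
    assert (Hb2 : Rabs (b0 - t) < be - t) by (eapply Rlt_le_trans; [apply Hb0| apply Rmin_r]).
    apply Rabs_def2 in Hb1. apply Rabs_def2 in Hb2.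
    apply (RInt_correct (V := R_CompleteNormedModule)).
    apply (ex_RInt_continuous (V := R_CompleteNormedModule)). intros z Hz.
    apply continuity_pt_filterlim. apply Hf.
    assert (al < Rmin c b0) by (apply Rmin_glb_lt; lra).
    assert (Rmax c b0 < be) by (apply Rmax_lub_lt; lra). lra.
  - apply continuity_pt_filterlim. apply Hf; auto.
Qed.

Lemma RInt_same (f : R -> R) a : RInt f a a = 0.
Proof. rewrite RInt_point. reflexivity. Qed.

Lemma inverse_exists (f : R -> R) (al be : R) (J : R -> Prop) :
  (forall t, al < t < be -> continuity_pt f t) ->
  (forall y, J y -> exists t1 t2, al < t1 /\ t1 < t2 /\ t2 < be /\ f t1 < y /\ y < f t2) ->
  exists g, forall y, J y -> al < g y < be /\ f (g y) = y.
Proof.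
  intros Hc Hs.
  assert (Hex : forall y, exists t, J y -> al < t < be /\ f t = y).
  { intros y. destruct (classic (J y)) as [Jy|nJ].
    - destruct (Hs y Jy) as [t1 [t2 [H1 [H2 [H3 [H4 H5]]]]]].
      destruct (Ranalysis5.IVT_interv (fun t => f t - y) t1 t2) as [z [Hz Hfz]]; try lra.
      + intros a Ha. apply continuity_pt_minus; [apply Hc; lra | apply continuity_pt_const; intros ??; reflexivity].
      + exists z. intros _. split; [lra|]. cbv beta in Hfz. lra.
    - exists 0. intros Jy; contradiction. }
  exists (fun y => proj1_sig (constructive_indefinite_description _ (Hex y))).
  intros y Jy. destruct (constructive_indefinite_description _ (Hex y)) as [t Ht]. simpl. auto.
Qed.

Section Inverse.
Variables (f df g : R -> R) (al be : R) (J : R -> Prop).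
Hypothesis Hd : forall t, al < t < be -> is_derive f t (df t).
Hypothesis Hdp : forall t, al < t < be -> 0 < df t.
Hypothesis Hg : forall y, J y -> al < g y < be /\ f (g y) = y.

Lemma lt_of_derive_pos_interv s t : al < s -> s < t -> t < be -> f s < f t.
Proof.
  intros H1 H2 H3. apply (lt_of_derive_pos f df s t H2).
  - intros x Hx. apply Hd; lra.
  - intros x Hx. apply (is_derive_continuity_pt f x (df x)). apply Hd; lra.
  - intros x Hx. apply Hdp; lra.
Qed.

Lemma le_of_derive_pos_interv s t : al < s -> s <= t -> t < be -> f s <= f t.
Proof. intros H1 [H2| ->] H3; [apply Rlt_le, lt_of_derive_pos_interv; auto| lra]. Qed.

Lemma inverse_le y1 y2 : J y1 -> J y2 -> y1 <= y2 -> g y1 <= g y2.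
Proof.
  intros J1 J2 H. destruct (Rle_lt_dec (g y1) (g y2)) as [|Hlt]; auto.
  destruct (Hg y1 J1) as [A1 B1]. destruct (Hg y2 J2) as [A2 B2].
  assert (f (g y2) < f (g y1)) by (apply lt_of_derive_pos_interv; lra). lra.
Qed.

Lemma inverse_continuity_pt y0 : J y0 ->
  (exists e, 0 < e /\ forall y, Rabs (y - y0) < e -> J y) -> continuity_pt g y0.
Proof.
  intros J0 [e [He HJ]]. apply eps_continuity_pt. intros eta Heta.
  destruct (Hg y0 J0) as [[Ha Hb] Hf0].
  set (e' := Rmin (eta / 2) (Rmin ((g y0 - al) / 2) ((be - g y0) / 2))).
  assert (He' : 0 < e' /\ e' <= eta / 2 /\ e' <= (g y0 - al) / 2 /\ e' <= (be - g y0) / 2).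
  { unfold e'. pose proof (Rmin_l (eta / 2) (Rmin ((g y0 - al) / 2) ((be - g y0) / 2))).
    pose proof (Rmin_r (eta / 2) (Rmin ((g y0 - al) / 2) ((be - g y0) / 2))).
    pose proof (Rmin_l ((g y0 - al) / 2) ((be - g y0) / 2)).
    pose proof (Rmin_r ((g y0 - al) / 2) ((be - g y0) / 2)).
    repeat split; try lra. repeat apply Rmin_glb_lt; lra. }
  destruct He' as [He1 [He2 [He3 He4]]].
  assert (Hlo : f (g y0 - e') < y0) by (rewrite <- Hf0 at 2; apply lt_of_derive_pos_interv; lra).
  assert (Hhi : y0 < f (g y0 + e')) by (rewrite <- Hf0 at 1; apply lt_of_derive_pos_interv; lra).
  exists (Rmin e (Rmin (y0 - f (g y0 - e')) (f (g y0 + e') - y0))). split.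
  { apply Rmin_glb_lt; [lra| apply Rmin_glb_lt; lra]. }
  intros y Hy.
  assert (Hy1 : Rabs (y - y0) < e) by (eapply Rlt_le_trans; [apply Hy| apply Rmin_l]).
  assert (Hy2 : Rabs (y - y0) < Rmin (y0 - f (g y0 - e')) (f (g y0 + e') - y0))
    by (eapply Rlt_le_trans; [apply Hy| apply Rmin_r]).
  assert (Hy3 : Rabs (y - y0) < y0 - f (g y0 - e')) by (eapply Rlt_le_trans; [apply Hy2| apply Rmin_l]).
  assert (Hy4 : Rabs (y - y0) < f (g y0 + e') - y0) by (eapply Rlt_le_trans; [apply Hy2| apply Rmin_r]).
  apply Rabs_def2 in Hy3. apply Rabs_def2 in Hy4.
  destruct (Hg y (HJ y Hy1)) as [[Ha' Hb'] Hf'].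
  assert (g y0 - e' < g y).
  { destruct (Rle_lt_dec (g y) (g y0 - e')) as [Hle|]; auto.
    assert (f (g y) <= f (g y0 - e')) by (apply le_of_derive_pos_interv; lra). lra. }
  assert (g y < g y0 + e').
  { destruct (Rle_lt_dec (g y0 + e') (g y)) as [Hle|]; auto.
    assert (f (g y0 + e') <= f (g y)) by (apply le_of_derive_pos_interv; lra). lra. }
  apply Rabs_def1; lra.
Qed.

Lemma is_derive_inverse y0 : J y0 ->
  (exists e, 0 < e /\ forall y, Rabs (y - y0) < e -> J y) ->
  is_derive g y0 (/ df (g y0)).
Proof.
  intros J0 [e [He HJ]].
  set (lb := y0 - e / 2). set (ub := y0 + e / 2).
  assert (Jl : J lb) by (apply HJ; unfold lb; rewrite Rabs_left; lra).
  assert (Ju : J ub) by (apply HJ; unfold ub; rewrite Rabs_right; lra).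
  assert (Prf : forall a, g lb <= a <= g ub -> derivable_pt f a).
  { intros a Ha. destruct (Hg lb Jl) as [[? ?] _]. destruct (Hg ub Ju) as [[? ?] _].
    exists (df a). apply is_derive_Reals, Hd; lra. }
  assert (Hinc : g lb <= g y0 <= g ub) by (split; apply inverse_le; auto; unfold lb, ub; lra).
  assert (Hc : continuity_pt g y0) by (apply inverse_continuity_pt; auto; exists e; auto).
  assert (Hcomp : forall x0, lb <= x0 <= ub -> comp f g x0 = id x0).
  { intros x0 Hx0. unfold comp, id. apply Hg, HJ. unfold lb, ub in Hx0. apply Rabs_def1; lra. }
  destruct (Hg y0 J0) as [[Ha Hb] Hf0].
  assert (Hdv : derive_pt f (g y0) (Prf (g y0) Hinc) = df (g y0)).
  { apply derive_pt_eq_0. apply is_derive_Reals, Hd; lra. }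
  assert (Hne : derive_pt f (g y0) (Prf (g y0) Hinc) <> 0)
    by (rewrite Hdv; pose proof (Hdp (g y0) ltac:(lra)); lra).
  assert (H := Ranalysis5.derivable_pt_lim_recip_interv f g lb ub y0 Prf Hc ltac:(unfold lb, ub; lra)
     ltac:(unfold lb, ub; lra) Hinc Hcomp Hne).
  rewrite Hdv in H. apply is_derive_Reals.
  replace (/ df (g y0)) with (1 / df (g y0)) by (unfold Rdiv; ring). exact H.
Qed.
End Inverse.

Lemma cvg_p_infty_eps (f : R -> R) l :
  (forall eps, 0 < eps -> exists R0, forall r, R0 < r -> Rabs (f r - l) < eps) ->
  filterlim f (Rbar_locally p_infty) (locally l).
Proof.
  intros H. apply filterlim_locally. intros eps.
  destruct (H eps (cond_pos eps)) as [R0 HR]. exists R0. intros x Hx. apply HR; auto.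
Qed.

Lemma cvg_at_right_0_eps (f : R -> R) l :
  (forall eps, 0 < eps -> exists d, 0 < d /\ forall r, 0 < r < d -> Rabs (f r - l) < eps) ->
  filterlim f (at_right 0) (locally l).
Proof.
  intros H. apply filterlim_locally. intros eps.
  destruct (H eps (cond_pos eps)) as [d [Hd HR]]. exists (mkposreal d Hd).
  intros x Hx Hx0. apply HR. change (Rabs (x - 0) < d) in Hx.
  rewrite Rminus_0_r, Rabs_right in Hx by lra. lra.
Qed.

Lemma ratio_deviation (g dg : R -> R) (la e s r : R) : 0 < s < r ->
  (forall t, s <= t <= r -> is_derive g t (dg t)) ->
  (forall t, s <= t <= r -> Rabs (dg t - la) <= e) ->
  Rabs (g r / r - la) <= (Rabs (g s - la * s) + e * (r - s)) / r.
Proof.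
  intros Hsr Hd Hb.
  destruct (MVT_gen g s r dg) as [c [Hc Hcd]].
  { intros t. rewrite Rmin_left, Rmax_right by lra. intros Ht; apply Hd; lra. }
  { intros t. rewrite Rmin_left, Rmax_right by lra. intros Ht.
    apply (is_derive_continuity_pt _ _ _ (Hd t Ht)). }
  rewrite Rmin_left, Rmax_right in Hc by lra.
  assert (E : g r / r - la = (g s - la * s + (dg c - la) * (r - s)) / r).
  { replace (g r) with (g s + dg c * (r - s)) by lra. field. lra. }
  rewrite E. unfold Rdiv. rewrite Rabs_mult, (Rabs_right (/ r)) by (apply Rle_ge, Rlt_le, Rinv_0_lt_compat; lra).
  apply Rmult_le_compat_r; [apply Rlt_le, Rinv_0_lt_compat; lra|].
  eapply Rle_trans; [apply Rabs_triang|]. rewrite Rabs_mult, (Rabs_right (r - s)) by lra.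
  specialize (Hb c Hc). nra.
Qed.

Lemma ratio_cvg_p_infty (g dg : R -> R) (A la : R) :
  (forall r, A < r -> is_derive g r (dg r)) ->
  (forall eps, 0 < eps -> exists R0, forall r, R0 < r -> Rabs (dg r - la) < eps) ->
  filterlim (fun r => g r / r) (Rbar_locally p_infty) (locally la).
Proof.
  intros Hd Hdg. apply cvg_p_infty_eps. intros eps He.
  destruct (Hdg (eps / 2)) as [R0 HR0]; [lra|].
  set (s := Rmax (Rmax A 0) R0 + 1).
  assert (Hs : A < s /\ 0 < s /\ R0 < s).
  { unfold s. pose proof (Rmax_l (Rmax A 0) R0). pose proof (Rmax_r (Rmax A 0) R0).
    pose proof (Rmax_l A 0). pose proof (Rmax_r A 0). lra. }
  set (D := Rabs (g s - la * s)). assert (HD : 0 <= D) by apply Rabs_pos.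
  exists (s + 2 * D / eps). intros r Hr.
  assert (HDe : 0 <= 2 * D / eps) by (apply Rmult_le_pos; [lra | apply Rlt_le, Rinv_0_lt_compat; lra]).
  assert (HDr : 2 * D < eps * r).
  { assert (2 * D / eps < r) by lra. apply (Rmult_lt_compat_l eps) in H; [|lra].
    replace (eps * (2 * D / eps)) with (2 * D) in H by (field; lra). exact H. }
  eapply Rle_lt_trans; [apply (ratio_deviation g dg la (eps / 2) s r); try lra|].
  - intros t Ht. apply Hd. lra.
  - intros t Ht. apply Rlt_le, HR0. lra.
  - apply (Rmult_lt_reg_r r); [lra|]. unfold Rdiv. rewrite Rmult_assoc, Rinv_l, Rmult_1_r by lra.
    fold D. nra.
Qed.

Lemma ratio_cvg_at_right_0 (g dg : R -> R) (A la : R) : 0 < A ->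
  (forall r, 0 < r < A -> is_derive g r (dg r)) ->
  (forall eps, 0 < eps -> exists d, 0 < d /\ forall r, 0 < r < d -> Rabs (dg r - la) < eps) ->
  (forall eps, 0 < eps -> exists d, 0 < d /\ forall r, 0 < r < d -> Rabs (g r) < eps) ->
  filterlim (fun r => g r / r) (at_right 0) (locally la).
Proof.
  intros HA Hd Hdg Hg0. apply cvg_at_right_0_eps. intros eps He.
  destruct (Hdg (eps / 2)) as [d1 [Hd1 H1]]; [lra|].
  exists (Rmin d1 A). split; [apply Rmin_glb_lt; lra|]. intros r [Hr0 Hr].
  assert (Hrd1 : r < d1) by (eapply Rlt_le_trans; [apply Hr| apply Rmin_l]).
  assert (HrA : r < A) by (eapply Rlt_le_trans; [apply Hr| apply Rmin_r]).
  destruct (Hg0 (eps * r / 4)) as [d3 [Hd3 H3]]; [nra|].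
  set (k := eps * r / (4 * (Rabs la + 1))).
  assert (Hla := Rabs_pos la).
  assert (Hk : 0 < k /\ Rabs la * k < eps * r / 4).
  { unfold k. split; [apply Rdiv_lt_0_compat; nra|].
    apply (Rmult_lt_reg_r (4 * (Rabs la + 1))); [lra|].
    replace (Rabs la * (eps * r / (4 * (Rabs la + 1))) * (4 * (Rabs la + 1)))
      with (Rabs la * (eps * r)) by (field; lra). nra. }
  set (s := Rmin (Rmin (r / 2) (d3 / 2)) k).
  assert (Hs : 0 < s /\ s <= r / 2 /\ s < d3 /\ s <= k).
  { unfold s. pose proof (Rmin_l (Rmin (r / 2) (d3 / 2)) k). pose proof (Rmin_r (Rmin (r / 2) (d3 / 2)) k).
    pose proof (Rmin_l (r / 2) (d3 / 2)). pose proof (Rmin_r (r / 2) (d3 / 2)).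
    repeat split; try lra. repeat apply Rmin_glb_lt; lra. }
  assert (Hgs : Rabs (g s - la * s) < eps * r / 2).
  { assert (Rabs (g s) < eps * r / 4) by (apply H3; lra).
    assert (Rabs la * s <= Rabs la * k) by (apply Rmult_le_compat_l; lra).
    unfold Rminus. eapply Rle_lt_trans; [apply Rabs_triang|].
    rewrite Rabs_Ropp, Rabs_mult, (Rabs_right s) by lra. lra. }
  eapply Rle_lt_trans; [apply (ratio_deviation g dg la (eps / 2) s r); try lra|].
  - intros t Ht. apply Hd. lra.
  - intros t Ht. apply Rlt_le, H1. lra.
  - apply (Rmult_lt_reg_r r); [lra|]. unfold Rdiv. rewrite Rmult_assoc, Rinv_l, Rmult_1_r by lra.
    nra.
Qed.

Lemma continuity_pt_cst (c x : R) : continuity_pt (fun _ => c) x.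
Proof. apply continuity_pt_const. intros ??; reflexivity. Qed.

Lemma continuity_pt_exp (x : R) : continuity_pt exp x.
Proof. apply derivable_continuous_pt, derivable_pt_exp. Qed.

Lemma continuity_pt_ln (x : R) : 0 < x -> continuity_pt ln x.
Proof. intros Hx. apply derivable_continuous_pt. exists (/ x). now apply derivable_pt_lim_ln. Qed.

Lemma exp_le_compat x y : x <= y -> exp x <= exp y.
Proof. intros [H| ->]; [apply Rlt_le, exp_increasing; auto| lra]. Qed.

Lemma pw_of_pos x c : 0 < x -> pw x c = exp (c * ln x).
Proof. intros H. unfold pw. destruct (Rlt_dec 0 x); [reflexivity|lra]. Qed.

Lemma pw_of_nonpos x c : x <= 0 -> pw x c = 0.
Proof. intros H. unfold pw. destruct (Rlt_dec 0 x); [lra|reflexivity]. Qed.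

Lemma pw_ge0 x c : 0 <= pw x c.
Proof. unfold pw. destruct (Rlt_dec 0 x); [unfold Rpower; apply Rlt_le, exp_pos|lra]. Qed.

Lemma pw_le_compat x y c : 0 <= c -> 0 <= x <= y -> pw x c <= pw y c.
Proof.
  intros Hc [Hx Hxy]. destruct (Req_dec x 0) as [-> | Hne].
  - rewrite pw_of_nonpos by lra. apply pw_ge0.
  - rewrite !pw_of_pos by lra. apply exp_le_compat.
    apply Rmult_le_compat_l; auto. apply ln_le; lra.
Qed.

Lemma pw_mult_exp x y c : 0 <= x -> 0 < y -> pw (x * y) c = pw x c * exp (c * ln y).
Proof.
  intros Hx Hy. destruct (Req_dec x 0) as [-> | Hne].
  - rewrite Rmult_0_l, !pw_of_nonpos by lra. ring.
  - rewrite !pw_of_pos by nra. rewrite ln_mult by lra. rewrite <- exp_plus. f_equal; ring.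
Qed.

Lemma mult_pw x c : 0 <= x -> x * pw x c = pw x (c - 1) * (x * x).
Proof.
  intros Hx. destruct (Req_dec x 0) as [-> | Hne].
  - rewrite !pw_of_nonpos by lra. ring.
  - rewrite !pw_of_pos by lra. replace (c * ln x) with ((c - 1) * ln x + ln x) by ring.
    rewrite exp_plus, exp_ln by lra. ring.
Qed.

Lemma continuity_pt_pw_Rabs c x0 : 0 < c -> continuity_pt (fun x => pw (Rabs x) c) x0.
Proof.
  intros Hc. destruct (Req_dec x0 0) as [-> | Hx0].
  - apply eps_continuity_pt. intros eps He. exists (exp (ln eps / c)). split; [apply exp_pos|].
    intros x Hx. rewrite Rminus_0_r in Hx. rewrite Rabs_R0, (pw_of_nonpos 0), Rminus_0_r by lra.
    rewrite Rabs_right by apply Rle_ge, pw_ge0.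
    destruct (Req_dec x 0) as [-> | Hne]; [rewrite Rabs_R0, pw_of_nonpos by lra; auto|].
    rewrite pw_of_pos by (apply Rabs_pos_lt; auto).
    rewrite <- (exp_ln eps) by auto. apply exp_increasing.
    apply ln_increasing in Hx; [|apply Rabs_pos_lt; auto]. rewrite ln_exp in Hx.
    apply (Rmult_lt_compat_l c) in Hx; auto. field_simplify in Hx; lra.
  - assert (Hpos : 0 < Rabs x0) by (apply Rabs_pos_lt; auto).
    apply continuity_pt_filterlim.
    apply (filterlim_ext_loc (fun x => exp (c * ln (Rabs x)))).
    + exists (mkposreal _ Hpos). intros s Hs. change (Rabs (s - x0) < Rabs x0) in Hs.
      assert (0 < Rabs s).
      { pose proof (Rabs_triang_inv x0 s). replace (x0 - s) with (- (s - x0)) in H by ring.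
        rewrite Rabs_Ropp in H. lra. }
      now rewrite pw_of_pos.
    + rewrite pw_of_pos by auto. apply (continuity_pt_filterlim (fun x => exp (c * ln (Rabs x)))).
      apply (continuity_pt_comp (fun x => c * ln (Rabs x)) exp); [|apply continuity_pt_exp].
      apply continuity_pt_mult; [apply continuity_pt_cst|].
      apply (continuity_pt_comp Rabs ln); [apply Rcontinuity_abs | now apply continuity_pt_ln].
Qed.

(** * The function [G] *)

Definition bexp (p : R) := (p + 1) / 2.
Definition qexp (p : R) := 2 * p / (p + 1).
Definition G (p M t : R) := 1 + bexp p * t ^ 2 + M * pw (Rabs t) (qexp p).
Definition dG (p M t : R) := 2 * bexp p * t + M * qexp p * pw t (qexp p - 1).

Lemma G_even p M t : G p M (- t) = G p M t.
Proof. unfold G. rewrite Rabs_Ropp. f_equal. f_equal. f_equal. ring. Qed.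

Section G.
Variables (p M : R).
Hypothesis hp : 1 < p.

Lemma qexp_gt1 : 1 < qexp p.
Proof. unfold qexp. apply (Rmult_lt_reg_r (p + 1)); [lra|]. field_simplify; lra. Qed.

Lemma qexp_lt2 : qexp p < 2.
Proof. unfold qexp. apply (Rmult_lt_reg_r (p + 1)); [lra|]. field_simplify; lra. Qed.

Lemma bexp_gt1 : 1 < bexp p.
Proof. unfold bexp; lra. Qed.

Lemma bexp_qexp : bexp p * qexp p = p.
Proof. unfold bexp, qexp; field; lra. Qed.

Lemma G_0 : G p M 0 = 1.
Proof. unfold G. rewrite Rabs_R0, pw_of_nonpos by lra. ring. Qed.

Lemma G_of_pos t : 0 < t -> G p M t = 1 + bexp p * t ^ 2 + M * exp (qexp p * ln t).
Proof. intros Ht. unfold G. rewrite Rabs_right, pw_of_pos by lra. reflexivity. Qed.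

Lemma continuity_pt_G t : continuity_pt (G p M) t.
Proof.
  unfold G. apply continuity_pt_plus; [apply continuity_pt_plus|]; try apply continuity_pt_mult;
    try apply continuity_pt_cst.
  - apply derivable_continuous_pt, derivable_pt_pow.
  - apply continuity_pt_pw_Rabs. pose proof qexp_gt1; lra.
Qed.

Lemma is_derive_G t : 0 < t -> is_derive (G p M) t (dG p M t).
Proof.
  intros Ht.
  apply (is_derive_ext_loc (fun s => 1 + bexp p * s ^ 2 + M * exp (qexp p * ln s))).
  - exists (mkposreal t Ht). intros s Hs. change (Rabs (s - t) < t) in Hs.
    apply Rabs_def2 in Hs. rewrite G_of_pos by lra. reflexivity.
  - unfold dG. rewrite pw_of_pos by lra.
    auto_derive; [lra|].
    replace ((qexp p - 1) * ln t) with (qexp p * ln t + - ln t) by ring.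
    rewrite exp_plus, exp_Ropp, exp_ln by lra. field. lra.
Qed.

Lemma G_lower_of_M_nonneg t : 0 <= M -> 1 <= G p M t.
Proof.
  intros HM. unfold G. pose proof (pw_ge0 (Rabs t) (qexp p)). pose proof bexp_gt1.
  pose proof (pow2_ge_0 t). assert (0 <= M * pw (Rabs t) (qexp p)) by (apply Rmult_le_pos; lra). nra.
Qed.

(* For [M < 0], [G] attains its minimum on [[0, oo)] at [phi_min]. *)
Definition phi_min := exp (ln (- M * qexp p / (2 * bexp p)) / (2 - qexp p)).

Lemma phi_min_pos : 0 < phi_min.
Proof. apply exp_pos. Qed.

Lemma dG_of_pos t : 0 < t ->
  dG p M t = exp ((qexp p - 1) * ln t) * (2 * bexp p * exp ((2 - qexp p) * ln t) + M * qexp p).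
Proof.
  intros Ht. unfold dG. rewrite pw_of_pos by lra.
  replace (exp ((qexp p - 1) * ln t) * (2 * bexp p * exp ((2 - qexp p) * ln t) + M * qexp p))
    with (2 * bexp p * (exp ((qexp p - 1) * ln t) * exp ((2 - qexp p) * ln t))
          + M * qexp p * exp ((qexp p - 1) * ln t)) by ring.
  rewrite <- exp_plus. replace ((qexp p - 1) * ln t + (2 - qexp p) * ln t) with (ln t) by ring.
  rewrite exp_ln by lra. ring.
Qed.

Lemma exp_phi_min : M < 0 -> exp ((2 - qexp p) * ln phi_min) = - M * qexp p / (2 * bexp p).
Proof.
  intros HM. pose proof qexp_gt1; pose proof qexp_lt2; pose proof bexp_gt1.
  unfold phi_min. rewrite ln_exp.
  replace ((2 - qexp p) * (ln (- M * qexp p / (2 * bexp p)) / (2 - qexp p)))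
    with (ln (- M * qexp p / (2 * bexp p))) by (field; lra).
  apply exp_ln, Rdiv_lt_0_compat; nra.
Qed.

Lemma exp_2q_lt s t : 0 < s < t -> exp ((2 - qexp p) * ln s) < exp ((2 - qexp p) * ln t).
Proof.
  intros Hst. pose proof qexp_lt2. apply exp_increasing.
  apply Rmult_lt_compat_l; [lra|]. apply ln_increasing; lra.
Qed.

Lemma dG_neg t : M < 0 -> 0 < t < phi_min -> dG p M t < 0.
Proof.
  intros HM Ht. pose proof bexp_gt1. pose proof qexp_gt1.
  rewrite dG_of_pos by lra.
  assert (Hlt := exp_2q_lt t phi_min Ht). rewrite exp_phi_min in Hlt by auto.
  assert (2 * bexp p * exp ((2 - qexp p) * ln t) < - M * qexp p).
  { apply (Rmult_lt_compat_l (2 * bexp p)) in Hlt; [|lra].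
    replace (2 * bexp p * (- M * qexp p / (2 * bexp p))) with (- M * qexp p) in Hlt by (field; lra). lra. }
  pose proof (exp_pos ((qexp p - 1) * ln t)). nra.
Qed.

Lemma dG_pos t : phi_min < t -> 0 < dG p M t.
Proof.
  intros Ht. pose proof phi_min_pos. pose proof bexp_gt1. pose proof qexp_gt1.
  rewrite dG_of_pos by lra. apply Rmult_lt_0_compat; [apply exp_pos|].
  pose proof (exp_pos ((2 - qexp p) * ln t)).
  destruct (Rlt_le_dec M 0) as [HM|HM]; [|nra].
  assert (Hlt := exp_2q_lt phi_min t ltac:(lra)). rewrite exp_phi_min in Hlt by auto.
  apply (Rmult_lt_compat_l (2 * bexp p)) in Hlt; [|lra].
  replace (2 * bexp p * (- M * qexp p / (2 * bexp p))) with (- M * qexp p) in Hlt by (field; lra). lra.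
Qed.

Lemma G_decreasing s t : M < 0 -> 0 <= s < t -> t <= phi_min -> G p M t < G p M s.
Proof.
  intros HM Hst Htp. cut (- G p M s < - G p M t); [lra|].
  apply (lt_of_derive_pos (fun x => - G p M x) (fun x => - dG p M x) s t (proj2 Hst)).
  - intros x Hx. apply (is_derive_opp (G p M)), is_derive_G. lra.
  - intros x Hx. apply continuity_pt_opp, continuity_pt_G.
  - intros x Hx. assert (dG p M x < 0) by (apply dG_neg; auto; lra). lra.
Qed.

Lemma G_increasing s t : phi_min <= s < t -> G p M s < G p M t.
Proof.
  intros Hst. pose proof phi_min_pos.
  apply (lt_of_derive_pos (G p M) (dG p M) s t (proj2 Hst)).
  - intros x Hx. apply is_derive_G. lra.
  - intros x Hx. apply continuity_pt_G.
  - intros x Hx. apply dG_pos. lra.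
Qed.

Lemma G_ge_phi_min t : M < 0 -> 0 <= t -> G p M phi_min <= G p M t.
Proof.
  intros HM Ht. destruct (Rtotal_order t phi_min) as [H|[H|H]].
  - apply Rlt_le, G_decreasing; lra.
  - subst; lra.
  - apply Rlt_le, G_increasing; lra.
Qed.

Lemma mu_star_pos : 0 < mu_star p.
Proof.
  unfold mu_star, Rpower. pose proof (exp_pos (p / (p + 1) * ln ((p + 1) / (2 * p)))). nra.
Qed.

Lemma ln_mu_star : ln (mu_star p) = ln (p + 1) + p / (p + 1) * (ln (p + 1) - ln (2 * p)).
Proof.
  unfold mu_star. rewrite ln_mult by (try lra; unfold Rpower; apply exp_pos).
  rewrite ln_Rpower. unfold Rdiv at 2. rewrite ln_mult by (try apply Rinv_0_lt_compat; lra).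
  rewrite ln_Rinv by lra. unfold Rdiv. ring.
Qed.

(* That is [1 - (-M / mu_star p)^(p+1)], whence the threshold [mu_star]. *)
Lemma G_phi_min : M < 0 -> G p M phi_min = 1 - exp ((p + 1) * (ln (- M) - ln (mu_star p))).
Proof.
  intros HM. pose proof phi_min_pos. pose proof qexp_gt1; pose proof qexp_lt2; pose proof bexp_gt1.
  rewrite G_of_pos by auto.
  set (L := ln (- M * qexp p / (2 * bexp p))).
  assert (E1 : phi_min ^ 2 = exp (qexp p * ln phi_min) * exp ((2 - qexp p) * ln phi_min)).
  { rewrite <- exp_plus. replace (qexp p * ln phi_min + (2 - qexp p) * ln phi_min)
      with (ln phi_min + ln phi_min) by ring.
    rewrite exp_plus, exp_ln by auto. simpl; ring. }
  assert (E2 : exp (qexp p * ln phi_min) = exp (p * L)).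
  { unfold phi_min. rewrite ln_exp. f_equal. fold L. unfold qexp. field. split; lra. }
  assert (E3 : L = ln (- M) + ln (2 * p) - 2 * ln (p + 1)).
  { unfold L, qexp, bexp.
    replace (- M * (2 * p / (p + 1)) / (2 * ((p + 1) / 2))) with (- M * (2 * p) * / ((p + 1) * (p + 1)))
      by (field; lra).
    assert (0 < - M * (2 * p)) by nra. assert (0 < (p + 1) * (p + 1)) by nra.
    rewrite ln_mult, ln_Rinv by (try apply Rinv_0_lt_compat; lra).
    rewrite (ln_mult (p + 1) (p + 1)), (ln_mult (- M) (2 * p)) by lra. ring. }
  assert (E4 : exp ((p + 1) * (ln (- M) - ln (mu_star p))) = - M * exp (p * L) / (p + 1)).
  { rewrite ln_mu_star, E3.
    replace ((p + 1) * (ln (- M) - (ln (p + 1) + p / (p + 1) * (ln (p + 1) - ln (2 * p)))))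
      with (ln (- M) + p * (ln (- M) + ln (2 * p) - 2 * ln (p + 1)) + - ln (p + 1)) by (field; lra).
    rewrite !exp_plus, exp_Ropp, !exp_ln by lra. field. lra. }
  rewrite E1, exp_phi_min, E2, E4 by auto. unfold qexp, bexp. field. lra.
Qed.

Lemma G_phi_min_le : M <= - mu_star p -> G p M phi_min <= 0.
Proof.
  intros HM. pose proof mu_star_pos. rewrite G_phi_min by lra.
  assert (ln (mu_star p) <= ln (- M)) by (apply ln_le; lra).
  assert (0 <= (p + 1) * (ln (- M) - ln (mu_star p))) by (apply Rmult_le_pos; lra).
  pose proof (exp_ineq1_le ((p + 1) * (ln (- M) - ln (mu_star p)))). lra.
Qed.

Lemma G_phi_min_lt : M < - mu_star p -> G p M phi_min < 0.
Proof.
  intros HM. pose proof mu_star_pos. rewrite G_phi_min by lra.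
  assert (ln (mu_star p) < ln (- M)) by (apply ln_increasing; lra).
  assert (0 < (p + 1) * (ln (- M) - ln (mu_star p))) by (apply Rmult_lt_0_compat; lra).
  pose proof (exp_ineq1 ((p + 1) * (ln (- M) - ln (mu_star p))) ltac:(lra)). lra.
Qed.

Lemma G_phi_min_gt : M < 0 -> - mu_star p < M -> 0 < G p M phi_min.
Proof.
  intros HM0 HM. pose proof mu_star_pos. rewrite G_phi_min by lra.
  assert (ln (- M) < ln (mu_star p)) by (apply ln_increasing; lra).
  assert ((p + 1) * (ln (- M) - ln (mu_star p)) < 0).
  { assert (0 < (p + 1) * (ln (mu_star p) - ln (- M))) by (apply Rmult_lt_0_compat; lra). nra. }
  assert (Hlt : exp ((p + 1) * (ln (- M) - ln (mu_star p))) < exp 0) by (apply exp_increasing; lra).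
  rewrite exp_0 in Hlt. lra.
Qed.

Lemma G_pos_large : M < 0 -> exists t, phi_min < t /\ 0 < G p M t.
Proof.
  intros HM. pose proof phi_min_pos. pose proof qexp_gt1; pose proof qexp_lt2; pose proof bexp_gt1.
  set (s := Rmax (ln phi_min + 1) (ln (- M / bexp p) / (2 - qexp p))).
  assert (Hs1 := Rmax_l (ln phi_min + 1) (ln (- M / bexp p) / (2 - qexp p))).
  assert (Hs2 := Rmax_r (ln phi_min + 1) (ln (- M / bexp p) / (2 - qexp p))). fold s in Hs1, Hs2.
  exists (exp s). split.
  - rewrite <- (exp_ln phi_min) by auto. apply exp_increasing. lra.
  - rewrite G_of_pos by apply exp_pos. rewrite ln_exp.
    assert (E : exp s ^ 2 = exp (qexp p * s) * exp ((2 - qexp p) * s)).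
    { rewrite <- exp_plus. replace (qexp p * s + (2 - qexp p) * s) with (s + s) by ring.
      rewrite exp_plus. simpl; ring. }
    rewrite E.
    assert (Hs : ln (- M / bexp p) <= (2 - qexp p) * s).
    { apply (Rmult_le_compat_l (2 - qexp p)) in Hs2; [|lra].
      replace ((2 - qexp p) * (ln (- M / bexp p) / (2 - qexp p))) with (ln (- M / bexp p)) in Hs2
        by (field; lra). lra. }
    apply exp_le_compat in Hs. rewrite exp_ln in Hs by (apply Rdiv_lt_0_compat; lra).
    assert (- M <= bexp p * exp ((2 - qexp p) * s)).
    { apply (Rmult_le_compat_l (bexp p)) in Hs; [|lra].
      replace (bexp p * (- M / bexp p)) with (- M) in Hs by (field; lra). lra. }
    pose proof (exp_pos (qexp p * s)).
    assert (0 <= exp (qexp p * s) * (bexp p * exp ((2 - qexp p) * s) + M)) by (apply Rmult_le_pos; lra).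
    nra.
Qed.

Lemma first_root : M <= - mu_star p ->
  exists phi1, 0 < phi1 <= phi_min /\ G p M phi1 = 0 /\
    forall t, 0 <= t < phi1 -> 0 < G p M t.
Proof.
  intros HM. pose proof mu_star_pos. pose proof phi_min_pos.
  pose proof (G_phi_min_le HM).
  destruct (IVT_gen (G p M) 0 phi_min 0) as [x [Hx Gx]].
  - intros t. apply continuity_pt_G.
  - rewrite G_0, Rmin_right, Rmax_left by lra. lra.
  - rewrite Rmin_left, Rmax_right in Hx by lra.
    assert (x <> 0) by (intro E; rewrite E, G_0 in Gx; lra).
    exists x; repeat split; try lra.
    intros t Ht. rewrite <- Gx. apply G_decreasing; lra.
Qed.

Lemma two_roots : M < - mu_star p ->
  exists phi1 phi2, 0 < phi1 < phi2 /\ G p M phi1 = 0 /\ G p M phi2 = 0 /\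
    (forall t, 0 <= t < phi1 -> 0 < G p M t) /\
    (forall t, phi1 < t < phi2 -> G p M t < 0) /\
    (forall t, phi2 < t -> 0 < G p M t).
Proof.
  intros HM. pose proof mu_star_pos. pose proof phi_min_pos.
  pose proof (G_phi_min_lt HM).
  destruct (first_root ltac:(lra)) as [x1 [Hx1 [Gx1 Hpos1]]].
  destruct (G_pos_large ltac:(lra)) as [t3 [Ht3 Gt3]].
  destruct (IVT_gen (G p M) phi_min t3 0) as [x2 [Hx2 Gx2]].
  - intros t. apply continuity_pt_G.
  - rewrite Rmin_left, Rmax_right by lra. lra.
  - rewrite Rmin_left, Rmax_right in Hx2 by lra.
    assert (x2 <> phi_min) by (intro E; rewrite E in Gx2; lra).
    assert (x1 <> phi_min) by (intro E; rewrite E in Gx1; lra).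
    exists x1, x2; repeat split; try lra; auto.
    + intros t Ht. destruct (Rle_lt_dec t phi_min).
      * rewrite <- Gx1. apply G_decreasing; lra.
      * rewrite <- Gx2. apply G_increasing; lra.
    + intros t Ht. rewrite <- Gx2. apply G_increasing; lra.
Qed.

Lemma G_lower_bound : - mu_star p < M -> exists g, 0 < g /\ forall t, 0 <= t -> g <= G p M t.
Proof.
  intros HM. destruct (Rlt_le_dec M 0) as [HM0|HM0].
  - exists (G p M phi_min). split; [now apply G_phi_min_gt | intros t Ht; now apply G_ge_phi_min].
  - exists 1. split; [lra|]. intros t _. now apply G_lower_of_M_nonneg.
Qed.

Definition lipG (be : R) := 2 * bexp p * be + Rabs M * qexp p * pw be (qexp p - 1).

Lemma lipG_pos be : 0 < be -> 0 < lipG be.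
Proof.
  intros H. unfold lipG. pose proof qexp_gt1; pose proof bexp_gt1.
  pose proof (pw_ge0 be (qexp p - 1)). pose proof (Rabs_pos M).
  assert (0 <= Rabs M * qexp p * pw be (qexp p - 1)) by (apply Rmult_le_pos; [apply Rmult_le_pos|]; lra).
  nra.
Qed.

Lemma G_lipschitz t r be : 0 <= t <= be -> 0 <= r <= be ->
  Rabs (G p M t - G p M r) <= lipG be * Rabs (t - r).
Proof.
  intros Ht Hr. pose proof qexp_gt1; pose proof bexp_gt1.
  assert (Hmin : 0 <= Rmin r t) by (apply Rmin_glb; lra).
  assert (Hmax : Rmax r t <= be) by (apply Rmax_lub; lra).
  destruct (MVT_gen (G p M) r t (dG p M)) as [c [Hc Hcd]].
  - intros x Hx. apply is_derive_G. lra.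
  - intros x Hx. apply continuity_pt_G.
  - rewrite Hcd, Rabs_mult. apply Rmult_le_compat_r; [apply Rabs_pos|].
    unfold dG, lipG. eapply Rle_trans; [apply Rabs_triang|].
    rewrite !Rabs_mult. rewrite (Rabs_right 2), (Rabs_right (bexp p)), (Rabs_right c), (Rabs_right (qexp p)),
      (Rabs_right (pw c _)) by (try apply Rle_ge, pw_ge0; lra).
    assert (pw c (qexp p - 1) <= pw be (qexp p - 1)) by (apply pw_le_compat; lra).
    assert (0 <= Rabs M) by apply Rabs_pos.
    assert (Rabs M * qexp p * pw c (qexp p - 1) <= Rabs M * qexp p * pw be (qexp p - 1)).
    { apply Rmult_le_compat_l; [apply Rmult_le_pos; lra| auto]. }
    nra.
Qed.

Lemma Rabs_G_le_below_root r t : G p M r = 0 -> 0 <= t <= r ->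
  Rabs (G p M t) <= lipG r * (r - t).
Proof.
  intros Hr Ht. replace (r - t) with (Rabs (t - r)) by (rewrite Rabs_left1; lra).
  rewrite <- (Rminus_0_r (G p M t)), <- Hr. apply G_lipschitz; lra.
Qed.

Lemma Rabs_G_le_above_root r be t : G p M r = 0 -> 0 <= r <= t -> t <= be ->
  Rabs (G p M t) <= lipG be * (t - r).
Proof.
  intros Hr Ht Htb. replace (t - r) with (Rabs (t - r)) by (rewrite Rabs_right; lra).
  rewrite <- (Rminus_0_r (G p M t)), <- Hr. apply G_lipschitz; lra.
Qed.

Lemma G_ge_quadratic_large :
  exists T, 0 < T /\ forall t, T <= t -> (bexp p - 1 / 2) * t ^ 2 <= G p M t.
Proof.
  pose proof qexp_gt1; pose proof qexp_lt2. pose proof (Rabs_pos M).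
  set (T := exp (ln (2 * Rabs M + 1) / (2 - qexp p))).
  exists T. split; [apply exp_pos|]. intros t Ht.
  assert (HT : 0 < T) by apply exp_pos.
  rewrite G_of_pos by lra.
  assert (Hl : ln (2 * Rabs M + 1) <= (2 - qexp p) * ln t).
  { assert (HlT : ln T <= ln t) by (apply ln_le; lra).
    unfold T in HlT. rewrite ln_exp in HlT.
    apply (Rmult_le_compat_l (2 - qexp p)) in HlT; [|lra].
    replace ((2 - qexp p) * (ln (2 * Rabs M + 1) / (2 - qexp p))) with (ln (2 * Rabs M + 1)) in HlT
      by (field; lra). exact HlT. }
  apply exp_le_compat in Hl. rewrite exp_ln in Hl by lra.
  assert (E : t ^ 2 = exp (qexp p * ln t) * exp ((2 - qexp p) * ln t)).
  { rewrite <- exp_plus. replace (qexp p * ln t + (2 - qexp p) * ln t) with (ln t + ln t) by ring.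
    rewrite exp_plus, exp_ln by lra. simpl; ring. }
  rewrite E. pose proof (exp_pos (qexp p * ln t)).
  assert (HMa : - M <= Rabs M) by (rewrite <- Rabs_Ropp; apply Rle_abs).
  assert (0 <= exp (qexp p * ln t) * (exp ((2 - qexp p) * ln t) / 2 + M)) by (apply Rmult_le_pos; lra).
  nra.
Qed.

Lemma G_pos_min_below phi1 e : 0 < e < phi1 -> (forall t, 0 <= t < phi1 -> 0 < G p M t) ->
  exists g, 0 < g /\ forall t, 0 <= t <= phi1 - e -> g <= G p M t.
Proof.
  intros He Hpos.
  destruct (continuity_ab_min (G p M) 0 (phi1 - e)) as [m [Hm Hm0]]; [lra | intros; apply continuity_pt_G|].
  exists (G p M m). split; [apply Hpos; lra | exact Hm].
Qed.
End G.

(** * Self-similar solutions *)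

(* [U_{X}] has [phi = -U' U^(-bexp p) = phi_of_X X] constantly. *)
Definition aexp (p : R) := 2 / (p - 1).
Definition phi_of_X (p X : R) := aexp p * exp (- ((p - 1) / 2) * ln X).
Definition X_of_phi (p phi : R) := exp (- aexp p * ln (phi / aexp p)).

Section RootCorrespondence.
Variables (p M : R).
Hypothesis hp : 1 < p.

Lemma aexp_pos : 0 < aexp p.
Proof. unfold aexp. apply Rdiv_lt_0_compat; lra. Qed.

Lemma phi_of_X_pos X : 0 < phi_of_X p X.
Proof. unfold phi_of_X. pose proof aexp_pos. pose proof (exp_pos (- ((p - 1) / 2) * ln X)). nra. Qed.

Lemma X_of_phi_pos phi : 0 < X_of_phi p phi.
Proof. apply exp_pos. Qed.

Lemma phi_of_X_of_phi phi : 0 < phi -> phi_of_X p (X_of_phi p phi) = phi.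
Proof.
  intros H. pose proof aexp_pos. unfold phi_of_X, X_of_phi. rewrite ln_exp.
  replace (- ((p - 1) / 2) * (- aexp p * ln (phi / aexp p))) with (ln (phi / aexp p))
    by (unfold aexp; field; lra).
  rewrite exp_ln by (apply Rdiv_lt_0_compat; lra). field; lra.
Qed.

Lemma phi_of_X_decreasing X Y : 0 < X -> X < Y -> phi_of_X p Y < phi_of_X p X.
Proof.
  intros HX HXY. pose proof aexp_pos. unfold phi_of_X. apply Rmult_lt_compat_l; auto.
  apply exp_increasing. assert (ln X < ln Y) by (apply ln_increasing; lra).
  assert (0 < (p - 1) / 2) by lra. nra.
Qed.

Lemma root_equation_factor X : 0 < X ->
  Rpower X (p - 1)
  + M * Rpower (2 / (p - 1)) (2 * p / (p + 1)) * Rpower X ((p - 1) / (p + 1))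
  - 2 * Kc p / (p - 1) = Rpower X (p - 1) * G p M (phi_of_X p X).
Proof.
  intros HX. pose proof aexp_pos. pose proof (phi_of_X_pos X).
  rewrite G_of_pos by auto.
  unfold phi_of_X, Rpower, Kc. fold (aexp p).
  rewrite ln_mult by (auto; apply exp_pos). rewrite ln_exp.
  set (L := ln X). set (A := ln (aexp p)).
  assert (T1 : exp ((p - 1) * L) * (bexp p * (aexp p * exp (- ((p - 1) / 2) * L)) ^ 2)
               = bexp p * aexp p ^ 2).
  { replace ((aexp p * exp (- ((p - 1) / 2) * L)) ^ 2)
      with (aexp p ^ 2 * (exp (- ((p - 1) / 2) * L) * exp (- ((p - 1) / 2) * L))) by ring.
    rewrite <- exp_plus.
    transitivity (bexp p * aexp p ^ 2 *
      (exp ((p - 1) * L) * exp (- ((p - 1) / 2) * L + - ((p - 1) / 2) * L))); [ring|].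
    rewrite <- exp_plus. replace ((p - 1) * L + (- ((p - 1) / 2) * L + - ((p - 1) / 2) * L)) with 0 by field.
    rewrite exp_0; ring. }
  assert (T2 : exp ((p - 1) * L) * (M * exp (qexp p * (A + - ((p - 1) / 2) * L)))
     = M * exp (2 * p / (p + 1) * A) * exp ((p - 1) / (p + 1) * L)).
  { transitivity (M * (exp ((p - 1) * L) * exp (qexp p * (A + - ((p - 1) / 2) * L)))); [ring|].
    rewrite Rmult_assoc. f_equal. rewrite <- !exp_plus. f_equal. unfold qexp. field. lra. }
  transitivity (exp ((p - 1) * L)
      + exp ((p - 1) * L) * (bexp p * (aexp p * exp (- ((p - 1) / 2) * L)) ^ 2)
      + exp ((p - 1) * L) * (M * exp (qexp p * (A + - ((p - 1) / 2) * L)))); [|ring].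
  rewrite T1, T2. unfold aexp, bexp. field. lra.
Qed.

Lemma is_pos_root_iff X : 0 < X -> (is_pos_root p M X <-> G p M (phi_of_X p X) = 0).
Proof.
  intros HX. unfold is_pos_root. rewrite root_equation_factor by auto.
  assert (0 < Rpower X (p - 1)) by (unfold Rpower; apply exp_pos).
  split.
  - intros [_ H0]. apply Rmult_integral in H0. destruct H0; [lra|auto].
  - intros H0. split; auto. rewrite H0; ring.
Qed.

Lemma is_X2_of_first_root phi1 : 0 < phi1 -> G p M phi1 = 0 ->
  (forall t, 0 <= t < phi1 -> 0 < G p M t) -> is_X2 p M (X_of_phi p phi1).
Proof.
  intros H1 G1 Hpos. split.
  - apply is_pos_root_iff; [apply X_of_phi_pos|]. rewrite phi_of_X_of_phi; auto.
  - intros Y HYr. pose proof (proj1 HYr) as HY. apply is_pos_root_iff in HYr; [|auto].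
    destruct (Rle_lt_dec Y (X_of_phi p phi1)) as [Hle|Hlt]; auto. exfalso.
    apply phi_of_X_decreasing in Hlt; [|apply X_of_phi_pos]. rewrite phi_of_X_of_phi in Hlt by auto.
    pose proof (phi_of_X_pos Y). specialize (Hpos (phi_of_X p Y) ltac:(lra)). lra.
Qed.

Lemma is_X1_of_last_root phi2 : 0 < phi2 -> G p M phi2 = 0 ->
  (forall t, phi2 < t -> 0 < G p M t) -> is_X1 p M (X_of_phi p phi2).
Proof.
  intros H2 G2 Hpos. split.
  - apply is_pos_root_iff; [apply X_of_phi_pos|]. rewrite phi_of_X_of_phi; auto.
  - intros Y HYr. pose proof (proj1 HYr) as HY. apply is_pos_root_iff in HYr; [|auto].
    destruct (Rle_lt_dec (X_of_phi p phi2) Y) as [Hle|Hlt]; auto. exfalso.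
    apply phi_of_X_decreasing in Hlt; [|auto]. rewrite phi_of_X_of_phi in Hlt by auto.
    specialize (Hpos (phi_of_X p Y) Hlt). lra.
Qed.
End RootCorrespondence.

Section Asymptotics.
Variable p : R.
Hypothesis hp : 1 < p.

Lemma is_derive_exp_y (y phi : R -> R) r :
  is_derive y r (- phi r * exp ((bexp p - 1) * y r)) ->
  is_derive (fun r => exp (- (bexp p - 1) * y r)) r ((bexp p - 1) * phi r).
Proof.
  intros Hy. eapply is_derive_val; [|apply (is_derive_exp_comp y r _ (- (bexp p - 1)) Hy)].
  replace (- (bexp p - 1) * (- phi r * exp ((bexp p - 1) * y r)) * exp (- (bexp p - 1) * y r))
    with ((bexp p - 1) * phi r * (exp ((bexp p - 1) * y r) * exp (- (bexp p - 1) * y r))) by ring.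
  rewrite <- exp_plus. replace ((bexp p - 1) * y r + - (bexp p - 1) * y r) with 0 by ring.
  rewrite exp_0; ring.
Qed.

(* With [g = exp(-(bexp p - 1) y)], the ratio [exp y / U_X] is [((bexp p - 1) Phi r / g)^aexp],
    so it tends to [1] as soon as [g r / r] tends to [(bexp p - 1) Phi]. *)
Lemma exp_y_div_U (yr Phi r : R) : 0 < r -> 0 < Phi ->
  exp yr / U_of p (X_of_phi p Phi) r =
  exp (- aexp p * (ln (exp (- (bexp p - 1) * yr) / r) - ln ((bexp p - 1) * Phi))).
Proof.
  intros Hr HP. pose proof (aexp_pos p hp). unfold U_of, X_of_phi, Rpower.
  change (2 / (p - 1)) with (aexp p).
  assert (Hb : bexp p - 1 = / aexp p) by (unfold aexp, bexp; field; lra).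
  assert (E1 : ln (exp (- (bexp p - 1) * yr) / r) = - (bexp p - 1) * yr - ln r).
  { unfold Rdiv. rewrite ln_mult by (try apply exp_pos; apply Rinv_0_lt_compat; lra).
    rewrite ln_exp, ln_Rinv by lra. ring. }
  assert (E2 : ln ((bexp p - 1) * Phi) = - ln (aexp p) + ln Phi).
  { rewrite Hb, ln_mult by (try apply Rinv_0_lt_compat; lra). rewrite ln_Rinv by lra. ring. }
  assert (E3 : ln (Phi / aexp p) = ln Phi - ln (aexp p)).
  { unfold Rdiv. rewrite ln_mult by (try apply Rinv_0_lt_compat; lra). rewrite ln_Rinv by lra. ring. }
  rewrite E1, E2, E3. unfold Rdiv. rewrite <- exp_plus, <- exp_Ropp, <- exp_plus. f_equal.
  rewrite Hb. field. lra.
Qed.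

Lemma cvg_power_ratio (a la : R) : 0 < la ->
  filterlim (fun z => exp (- a * (ln z - ln la))) (locally la) (locally 1).
Proof.
  intros Hla.
  replace 1 with ((fun z => exp (- a * (ln z - ln la))) la)
    by (rewrite Rminus_diag, Rmult_0_r, exp_0; reflexivity).
  apply (continuity_pt_filterlim (fun z => exp (- a * (ln z - ln la)))).
  apply (continuity_pt_comp (fun z => - a * (ln z - ln la)) exp); [|apply continuity_pt_exp].
  apply continuity_pt_mult; [apply continuity_pt_cst|].
  apply continuity_pt_minus; [now apply continuity_pt_ln | apply continuity_pt_cst].
Qed.

Lemma exp_y_equiv_p_infty (y phi : R -> R) (A Phi : R) : 0 < Phi ->
  (forall r, A < r -> is_derive y r (- phi r * exp ((bexp p - 1) * y r))) ->
  (forall eps, 0 < eps -> exists R0, forall r, R0 < r -> Rabs (phi r - Phi) < eps) ->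
  is_lim (fun r => exp (y r) / U_of p (X_of_phi p Phi) r) p_infty 1.
Proof.
  intros HP Hy Hphi. assert (Hb1 : 0 < bexp p - 1) by (unfold bexp; lra).
  assert (Hla : 0 < (bexp p - 1) * Phi) by nra.
  assert (Hgr := ratio_cvg_p_infty (fun r => exp (- (bexp p - 1) * y r))
    (fun r => (bexp p - 1) * phi r) A ((bexp p - 1) * Phi)
    (fun r Hr => is_derive_exp_y y phi r (Hy r Hr))).
  assert (Hdg : forall eps, 0 < eps -> exists R0, forall r, R0 < r ->
    Rabs ((bexp p - 1) * phi r - (bexp p - 1) * Phi) < eps).
  { intros eps He. destruct (Hphi (eps / (bexp p - 1))) as [R0 HR0]; [apply Rdiv_lt_0_compat; lra|].
    exists R0. intros r Hr. rewrite <- Rmult_minus_distr_l, Rabs_mult, Rabs_right by lra.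
    specialize (HR0 r Hr). apply (Rmult_lt_compat_l (bexp p - 1)) in HR0; [|lra].
    replace ((bexp p - 1) * (eps / (bexp p - 1))) with eps in HR0 by (field; lra). exact HR0. }
  specialize (Hgr Hdg).
  eapply filterlim_ext_loc; [|exact (filterlim_comp _ _ _ _ _ _ _ _ Hgr (cvg_power_ratio (aexp p) _ Hla))].
  exists 0. intros r Hr. simpl. rewrite exp_y_div_U by lra. reflexivity.
Qed.

Lemma exp_y_equiv_at_right_0 (y phi : R -> R) (A Phi : R) : 0 < Phi -> 0 < A ->
  (forall r, 0 < r < A -> is_derive y r (- phi r * exp ((bexp p - 1) * y r))) ->
  (forall eps, 0 < eps -> exists d, 0 < d /\ forall r, 0 < r < d -> Rabs (phi r - Phi) < eps) ->
  (forall eps, 0 < eps -> exists d, 0 < d /\ forall r, 0 < r < d -> exp (- (bexp p - 1) * y r) < eps) ->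
  filterlim (fun r => exp (y r) / U_of p (X_of_phi p Phi) r) (at_right 0) (locally 1).
Proof.
  intros HP HA Hy Hphi Hg0. assert (Hb1 : 0 < bexp p - 1) by (unfold bexp; lra).
  assert (Hla : 0 < (bexp p - 1) * Phi) by nra.
  assert (Hgr := ratio_cvg_at_right_0 (fun r => exp (- (bexp p - 1) * y r))
    (fun r => (bexp p - 1) * phi r) A ((bexp p - 1) * Phi) HA
    (fun r Hr => is_derive_exp_y y phi r (Hy r Hr))).
  assert (Hdg : forall eps, 0 < eps -> exists d, 0 < d /\ forall r, 0 < r < d ->
    Rabs ((bexp p - 1) * phi r - (bexp p - 1) * Phi) < eps).
  { intros eps He. destruct (Hphi (eps / (bexp p - 1))) as [d [Hd HR0]]; [apply Rdiv_lt_0_compat; lra|].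
    exists d. split; auto. intros r Hr. rewrite <- Rmult_minus_distr_l, Rabs_mult, Rabs_right by lra.
    specialize (HR0 r Hr). apply (Rmult_lt_compat_l (bexp p - 1)) in HR0; [|lra].
    replace ((bexp p - 1) * (eps / (bexp p - 1))) with eps in HR0 by (field; lra). exact HR0. }
  assert (Habs : forall eps, 0 < eps -> exists d, 0 < d /\ forall r, 0 < r < d ->
    Rabs (exp (- (bexp p - 1) * y r)) < eps).
  { intros eps He. destruct (Hg0 eps He) as [d [Hd H]]. exists d. split; auto.
    intros r Hr. rewrite Rabs_right by (apply Rle_ge, Rlt_le, exp_pos). auto. }
  specialize (Hgr Hdg Habs).
  eapply filterlim_ext_loc; [|exact (filterlim_comp _ _ _ _ _ _ _ _ Hgr (cvg_power_ratio (aexp p) _ Hla))].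
  exists (mkposreal 1 Rlt_0_1). intros r _ Hr. simpl. rewrite exp_y_div_U by lra. reflexivity.
Qed.
End Asymptotics.

(** * Trajectories of the phase-plane system *)

Section Trajectory.
Variables (p M : R) (y phi : R -> R).
Hypothesis hp : 1 < p.
Hypothesis Hy : forall r, 0 < r -> is_derive y r (- phi r * exp ((bexp p - 1) * y r)).
Hypothesis Hphi : forall r, 0 < r -> is_derive phi r (exp ((bexp p - 1) * y r) * G p M (phi r)).
Hypothesis Hcy : forall r, 0 <= r -> continuity_pt y r.
Hypothesis Hcphi : forall r, 0 <= r -> continuity_pt phi r.
Hypothesis Hphi0 : phi 0 = 0.
Hypothesis Hphipos : forall r, 0 < r -> 0 < phi r.

Lemma y_le_y0 r : 0 <= r -> y r <= y 0.
Proof.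
  intros Hr. cut (- y 0 <= - y r); [lra|].
  apply (le_of_derive_nonneg (fun t => - y t) (fun t => phi t * exp ((bexp p - 1) * y t)) 0 r Hr).
  - intros t Ht. apply (is_derive_val _ _ (- (- phi t * exp ((bexp p - 1) * y t)))); [ring|].
    apply (is_derive_opp y), Hy. lra.
  - intros t Ht. apply continuity_pt_opp, Hcy. lra.
  - intros t Ht. apply Rmult_le_pos; [apply Rlt_le, Hphipos; lra | apply Rlt_le, exp_pos].
Qed.

Lemma phi_le_of_G_nonneg s t : 0 < s <= t ->
  (forall x, s < x < t -> 0 <= G p M (phi x)) -> phi s <= phi t.
Proof.
  intros Hst HG.
  apply (le_of_derive_nonneg phi (fun r => exp ((bexp p - 1) * y r) * G p M (phi r)) s t); try lra.
  - intros x Hx. apply Hphi. lra.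
  - intros x Hx. apply Hcphi. lra.
  - intros x Hx. apply Rmult_le_pos; [apply Rlt_le, exp_pos | apply HG; auto].
Qed.

Lemma exp_neg_y_le_linear s0 K : 0 < s0 -> (forall r, s0 <= r -> phi r <= K) ->
  forall r, s0 <= r ->
  exp (- (bexp p - 1) * y r) <= exp (- (bexp p - 1) * y s0) + (bexp p - 1) * K * (r - s0).
Proof.
  intros Hs0 HK r Hr. pose proof (bexp_gt1 p hp).
  set (g := fun r => exp (- (bexp p - 1) * y r)).
  assert (Hg : forall t, 0 < t -> is_derive g t ((bexp p - 1) * phi t))
    by (intros t Ht; apply is_derive_exp_y, Hy; auto).
  cut (g r - g s0 <= (bexp p - 1) * K * r - (bexp p - 1) * K * s0); [unfold g; lra|].
  apply (increment_le_of_derive_le g (fun t => (bexp p - 1) * K * t)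
    (fun t => (bexp p - 1) * phi t) (fun _ => (bexp p - 1) * K) s0 r Hr).
  - intros t Ht. apply Hg. lra.
  - intros t Ht. auto_derive; auto; ring.
  - intros t Ht. apply (is_derive_continuity_pt _ _ _ (Hg t ltac:(lra))).
  - intros t Ht. apply continuity_pt_mult; [apply continuity_pt_cst | apply derivable_continuous_pt, derivable_pt_id].
  - intros t Ht. apply Rmult_le_compat_l; [lra | apply HK; lra].
Qed.

(* If [phi <= K], then [exp (-(bexp p - 1) y)] grows at most linearly, so
    [phi' >= g / (A + B (r - s0))] grows at least like a logarithm. *)
Lemma phi_ge_log s0 K g : 0 < s0 -> 0 < K -> 0 < g ->
  (forall r, s0 <= r -> phi r <= K /\ g <= G p M (phi r)) ->
  let A := exp (- (bexp p - 1) * y s0) in let B := (bexp p - 1) * K in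
  forall r, s0 <= r -> g / B * (ln (A + B * (r - s0)) - ln A) <= phi r - phi s0.
Proof.
  intros Hs0 HK Hg H A B r Hr. pose proof (bexp_gt1 p hp).
  assert (HA : 0 < A) by apply exp_pos. assert (HB : 0 < B) by (unfold B; nra).
  assert (Hlin := exp_neg_y_le_linear s0 K Hs0 (fun r Hr => proj1 (H r Hr))). fold A B in Hlin.
  set (h := fun r => g / B * ln (A + B * (r - s0))).
  assert (Hh : forall r, s0 <= r -> is_derive h r (g / (A + B * (r - s0)))).
  { intros t Ht. unfold h. auto_derive; [nra | field; split; nra]. }
  replace (g / B * (ln (A + B * (r - s0)) - ln A)) with (h r - h s0)
    by (unfold h; replace (A + B * (s0 - s0)) with A by ring; ring).
  apply (increment_le_of_derive_le h phi (fun t => g / (A + B * (t - s0)))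
    (fun t => exp ((bexp p - 1) * y t) * G p M (phi t)) s0 r); try lra.
  - intros t Ht. apply Hh; lra.
  - intros t Ht. apply Hphi. lra.
  - intros t Ht. apply (is_derive_continuity_pt h t _ (Hh t ltac:(lra))).
  - intros t Ht. apply Hcphi. lra.
  - intros t Ht. assert (Hlt := Hlin t ltac:(lra)).
    assert (E : exp ((bexp p - 1) * y t) = / exp (- (bexp p - 1) * y t))
      by (rewrite <- exp_Ropp; f_equal; ring).
    rewrite E. pose proof (exp_pos (- (bexp p - 1) * y t)).
    destruct (H t ltac:(lra)) as [_ Hgt].
    unfold Rdiv. rewrite (Rmult_comm (/ _)). apply Rmult_le_compat; try lra.
    + apply Rlt_le, Rinv_0_lt_compat. nra.
    + apply Rinv_le_contravar; auto.
Qed.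

Lemma no_bounded_phi_with_G_pos r0 K g : 0 <= r0 -> 0 < K -> 0 < g ->
  (forall r, r0 <= r -> phi r <= K /\ g <= G p M (phi r)) -> False.
Proof.
  intros Hr0 HK Hg H. pose proof (bexp_gt1 p hp).
  set (s0 := r0 + 1).
  assert (H' : forall r, s0 <= r -> phi r <= K /\ g <= G p M (phi r)) by (intros r Hr; apply H; unfold s0 in *; lra).
  assert (Hlog := phi_ge_log s0 K g ltac:(unfold s0; lra) HK Hg H'). cbv zeta in Hlog.
  set (A := exp (- (bexp p - 1) * y s0)) in Hlog. set (B := (bexp p - 1) * K) in Hlog.
  assert (HA : 0 < A) by apply exp_pos. assert (HB : 0 < B) by (unfold B; nra).
  assert (HE := exp_pos (K * B / g + 1)).
  set (r := s0 + A * exp (K * B / g + 1) / B).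
  assert (Hr : s0 < r) by (assert (0 < A * exp (K * B / g + 1) / B) by (apply Rdiv_lt_0_compat; nra); unfold r; lra).
  specialize (Hlog r ltac:(lra)).
  replace (A + B * (r - s0)) with (A * (1 + exp (K * B / g + 1))) in Hlog by (unfold r; field; lra).
  rewrite ln_mult in Hlog by lra.
  assert (Hl : K * B / g + 1 < ln (1 + exp (K * B / g + 1))).
  { rewrite <- (ln_exp (K * B / g + 1)) at 1. apply ln_increasing; lra. }
  assert (HgB : 0 < g / B) by (apply Rdiv_lt_0_compat; auto).
  apply (Rmult_lt_compat_l (g / B)) in Hl; auto.
  replace (g / B * (K * B / g + 1)) with (K + g / B) in Hl by (field; lra).
  assert (0 < phi s0) by (apply Hphipos; unfold s0; lra).
  destruct (H' r ltac:(lra)) as [Hk _].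
  replace (ln A + ln (1 + exp (K * B / g + 1)) - ln A) with (ln (1 + exp (K * B / g + 1))) in Hlog by ring.
  lra.
Qed.

Lemma ln_phi_y_nondecreasing r0 : 0 < r0 ->
  (forall r, r0 <= r -> (bexp p - 1 / 2) * phi r ^ 2 <= G p M (phi r)) ->
  forall r, r0 <= r ->
  ln (phi r0) + (bexp p - 1 / 2) * y r0 <= ln (phi r) + (bexp p - 1 / 2) * y r.
Proof.
  intros Hr0 H r Hr.
  set (Z := fun r => ln (phi r) + (bexp p - 1 / 2) * y r).
  set (dZ := fun r => exp ((bexp p - 1) * y r) * G p M (phi r) / phi r
                      + (bexp p - 1 / 2) * (- phi r * exp ((bexp p - 1) * y r))).
  assert (HZ : forall r, 0 < r -> is_derive Z r (dZ r)).
  { intros t Ht. apply (is_derive_plus (fun r => ln (phi r)) (fun r => (bexp p - 1 / 2) * y r)).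
    - apply is_derive_ln_comp; auto.
    - apply (is_derive_scal y t (bexp p - 1 / 2)). auto. }
  apply (le_of_derive_nonneg Z dZ r0 r Hr).
  - intros t Ht. apply HZ; lra.
  - intros t Ht. apply (is_derive_continuity_pt Z t _ (HZ t ltac:(lra))).
  - intros t Ht. assert (Hp := Hphipos t ltac:(lra)). specialize (H t ltac:(lra)).
    pose proof (exp_pos ((bexp p - 1) * y t)). unfold dZ.
    replace (exp ((bexp p - 1) * y t) * G p M (phi t) / phi t +
      (bexp p - 1 / 2) * (- phi t * exp ((bexp p - 1) * y t)))
      with (exp ((bexp p - 1) * y t) * (G p M (phi t) - (bexp p - 1 / 2) * phi t ^ 2) / phi t)
      by (field; lra).
    apply Rmult_le_pos; [apply Rmult_le_pos; lra | apply Rlt_le, Rinv_0_lt_compat; lra].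
Qed.

Lemma no_phi_with_G_quadratic r0 : 0 < r0 ->
  (forall r, r0 <= r -> (bexp p - 1 / 2) * phi r ^ 2 <= G p M (phi r)) -> False.
Proof.
  intros Hr0 H.
  (* [u^(1/2) = exp (y / 2)] has derivative [- exp Z / 2] where [Z = ln phi + (bexp p - 1/2) y]
     is nondecreasing, so it would become negative *)
  set (Z0 := ln (phi r0) + (bexp p - 1 / 2) * y r0).
  set (w := fun r => exp (/ 2 * y r)).
  set (dw := fun r => / 2 * (- phi r * exp ((bexp p - 1) * y r)) * exp (/ 2 * y r)).
  assert (Hw : forall r, 0 < r -> is_derive w r (dw r)).
  { intros r Hr. apply is_derive_exp_comp, Hy. auto. }
  set (c := exp Z0 / 2). assert (Hc : 0 < c) by (unfold c; pose proof (exp_pos Z0); lra).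
  set (r := r0 + w r0 / c + 1).
  assert (Hr : r0 < r) by (unfold r; assert (0 < w r0 / c) by (apply Rdiv_lt_0_compat; [apply exp_pos|auto]); lra).
  assert (Hcmp : w r - w r0 <= (- c * r) - (- c * r0)).
  { apply (increment_le_of_derive_le w (fun t => - c * t) dw (fun _ => - c) r0 r); try lra.
    - intros t Ht. apply Hw; lra.
    - intros t Ht. auto_derive; auto; ring.
    - intros t Ht. apply (is_derive_continuity_pt w t _ (Hw t ltac:(lra))).
    - intros t Ht. apply continuity_pt_mult; [apply continuity_pt_cst | apply derivable_continuous_pt, derivable_pt_id].
    - intros t Ht. assert (Hp := Hphipos t ltac:(lra)).
      assert (HZt := ln_phi_y_nondecreasing r0 Hr0 H t ltac:(lra)). fold Z0 in HZt.
      assert (E : phi t * exp ((bexp p - 1) * y t) * exp (/ 2 * y t)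
                  = exp (ln (phi t) + (bexp p - 1 / 2) * y t)).
      { rewrite exp_plus, exp_ln by auto. rewrite Rmult_assoc, <- exp_plus. f_equal. f_equal. field. }
      apply exp_le_compat in HZt.
      unfold dw. replace (/ 2 * (- phi t * exp ((bexp p - 1) * y t)) * exp (/ 2 * y t))
        with (- (phi t * exp ((bexp p - 1) * y t) * exp (/ 2 * y t)) / 2) by field.
      rewrite E. unfold c. lra. }
  assert (0 < w r) by apply exp_pos.
  assert (- c * r - - c * r0 = - w r0 - c) by (unfold r; field; lra). lra.
Qed.

Lemma no_trajectory_of_G_lower_bound g : 0 < g -> (forall t, 0 <= t -> g <= G p M t) -> False.
Proof.
  intros Hg HG.
  destruct (G_ge_quadratic_large p M hp) as [T [HT Hbig]].
  destruct (classic (forall r, 1 <= r -> phi r <= T)) as [Hall|Hex].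
  - apply (no_bounded_phi_with_G_pos 1 T g); try lra. intros r Hr. split; auto.
    apply HG, Rlt_le, Hphipos. lra.
  - apply not_all_ex_not in Hex. destruct Hex as [r0 Hr0].
    apply imply_to_and in Hr0. destruct Hr0 as [Hr0 Hr0'].
    apply (no_phi_with_G_quadratic r0); [lra|]. intros r Hr. apply Hbig.
    assert (phi r0 <= phi r); [|lra].
    apply phi_le_of_G_nonneg; [lra|]. intros x Hx.
    assert (g <= G p M (phi x)) by (apply HG, Rlt_le, Hphipos; lra). lra.
Qed.

Section FirstRoot.
Variable phi1 : R.
Hypothesis Hphi1 : 0 < phi1.
Hypothesis HG1 : G p M phi1 = 0.
Hypothesis Hpos : forall t, 0 <= t < phi1 -> 0 < G p M t.

(* [G <= L (phi1 - phi)] makes [ln (phi1 - phi)] decrease at a bounded rate, so [phi]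
    cannot reach [phi1] in finite time. *)
Lemma ln_gap_lower_bound r1 : 0 < r1 -> (forall r, 0 < r < r1 -> phi r < phi1) ->
  forall t, r1 / 2 <= t < r1 ->
  ln (phi1 - phi (r1 / 2)) - lipG p M phi1 * exp ((bexp p - 1) * y 0) * r1 <= ln (phi1 - phi t).
Proof.
  intros Hr1 Hbelow t Ht. pose proof (bexp_gt1 p hp).
  set (C := lipG p M phi1 * exp ((bexp p - 1) * y 0)).
  assert (HC : 0 <= C) by (apply Rmult_le_pos; [apply Rlt_le, lipG_pos | apply Rlt_le, exp_pos]; lra).
  set (D := fun t => ln (phi1 - phi t)).
  set (dD := fun t => - (exp ((bexp p - 1) * y t) * G p M (phi t)) / (phi1 - phi t)).
  assert (HD : forall t, 0 < t < r1 -> is_derive D t (dD t)).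
  { intros s Hs. apply (is_derive_ln_comp (fun t => phi1 - phi t)); [specialize (Hbelow s Hs); lra|].
    apply (is_derive_val _ _ (0 - exp ((bexp p - 1) * y s) * G p M (phi s))); [ring|].
    apply (is_derive_minus (fun _ => phi1) phi); [auto_derive; auto | apply Hphi; lra]. }
  cut (- C * t - - C * (r1 / 2) <= D t - D (r1 / 2)); [unfold D; nra|].
  apply (increment_le_of_derive_le (fun s => - C * s) D (fun _ => - C) dD (r1 / 2) t (proj1 Ht)).
  - intros s Hs. auto_derive; auto; ring.
  - intros s Hs. apply HD; lra.
  - intros s Hs. apply continuity_pt_mult; [apply continuity_pt_cst | apply derivable_continuous_pt, derivable_pt_id].
  - intros s Hs. apply (is_derive_continuity_pt D s _ (HD s ltac:(lra))).
  - intros s Hs. assert (Hb := Hbelow s ltac:(lra)). assert (Hps := Hphipos s ltac:(lra)).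
    assert (HLs := Rabs_G_le_below_root p M hp phi1 (phi s) HG1 ltac:(lra)).
    apply Rabs_le_between in HLs.
    assert (He : exp ((bexp p - 1) * y s) <= exp ((bexp p - 1) * y 0)).
    { apply exp_le_compat. assert (y s <= y 0) by (apply y_le_y0; lra). nra. }
    pose proof (exp_pos ((bexp p - 1) * y s)).
    assert (HGq : G p M (phi s) / (phi1 - phi s) <= lipG p M phi1).
    { apply (Rmult_le_reg_r (phi1 - phi s)); [lra|].
      unfold Rdiv. rewrite Rmult_assoc, Rinv_l, Rmult_1_r by lra. lra. }
    assert (0 <= G p M (phi s) / (phi1 - phi s)) by (apply Rdiv_le_0_compat; [apply Rlt_le, Hpos|]; lra).
    unfold dD. replace (- (exp ((bexp p - 1) * y s) * G p M (phi s)) / (phi1 - phi s))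
      with (- (exp ((bexp p - 1) * y s) * (G p M (phi s) / (phi1 - phi s)))) by (field; lra).
    unfold C. assert (exp ((bexp p - 1) * y s) * (G p M (phi s) / (phi1 - phi s))
                      <= exp ((bexp p - 1) * y 0) * lipG p M phi1) by (apply Rmult_le_compat; lra).
    lra.
Qed.

Lemma phi_lt_root r : 0 <= r -> phi r < phi1.
Proof.
  intros Hr. destruct (Req_dec r 0) as [-> | Hr0]; [rewrite Hphi0; lra|].
  cut (phi r - phi1 < 0); [lra|].
  apply (neg_of_no_first_zero (fun r => phi r - phi1) 0); [| | |lra].
  - intros t Ht. apply continuity_pt_minus; [apply Hcphi; lra | apply continuity_pt_cst].
  - destruct (continuity_pt_eps phi 0 (Hcphi 0 (Rle_refl 0)) phi1 Hphi1) as [d [Hd Hdd]].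
    exists d; split; auto. intros t Ht. specialize (Hdd t). rewrite Hphi0, Rminus_0_r in Hdd.
    rewrite Rminus_0_r, Rabs_right in Hdd by lra. specialize (Hdd ltac:(lra)).
    apply Rabs_def2 in Hdd. lra.
  - intros r1 Hr1 Hz Hbelow. cbv beta in Hz, Hbelow.
    assert (Hlow := ln_gap_lower_bound r1 Hr1 (fun r Hr => ltac:(specialize (Hbelow r Hr); lra))).
    set (ka := exp (ln (phi1 - phi (r1 / 2)) - lipG p M phi1 * exp ((bexp p - 1) * y 0) * r1)).
    destruct (continuity_pt_eps phi r1 (Hcphi r1 ltac:(lra)) ka (exp_pos _)) as [d [Hd Hdd]].
    set (t := Rmax (r1 / 2) (r1 - d / 2)).
    assert (Ht : r1 / 2 <= t /\ r1 - d / 2 <= t /\ t < r1).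
    { unfold t. split; [apply Rmax_l | split; [apply Rmax_r | apply Rmax_lub_lt; lra]]. }
    specialize (Hdd t ltac:(rewrite Rabs_left by lra; lra)).
    specialize (Hlow t ltac:(lra)). apply exp_le_compat in Hlow. fold ka in Hlow.
    assert (Hb := Hbelow t ltac:(lra)).
    rewrite exp_ln in Hlow by lra. apply Rabs_def2 in Hdd. lra.
Qed.

Lemma phi_cvg_root : forall e, 0 < e -> exists R0, forall r, R0 < r -> Rabs (phi r - phi1) < e.
Proof.
  intros e He. set (e' := Rmin e (phi1 / 2)).
  assert (He' : 0 < e' <= e /\ e' < phi1).
  { unfold e'. split; [split; [apply Rmin_glb_lt | apply Rmin_l] | eapply Rle_lt_trans; [apply Rmin_r|]]; lra. }
  destruct (classic (forall r, 1 <= r -> phi r <= phi1 - e')) as [Hall|Hex].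
  - exfalso. destruct (G_pos_min_below p M hp phi1 e' ltac:(lra) Hpos) as [g [Hg Hgg]].
    apply (no_bounded_phi_with_G_pos 1 phi1 g); try lra. intros r Hr. split.
    + specialize (Hall r Hr); lra.
    + apply Hgg. split; [apply Rlt_le, Hphipos; lra | apply Hall; auto].
  - apply not_all_ex_not in Hex. destruct Hex as [r0 Hr0].
    apply imply_to_and in Hr0. destruct Hr0 as [Hr0 Hr0'].
    exists r0. intros r Hr.
    assert (phi r0 <= phi r).
    { apply phi_le_of_G_nonneg; [lra|]. intros x Hx. apply Rlt_le, Hpos.
      split; [apply Rlt_le, Hphipos; lra | apply phi_lt_root; lra]. }
    assert (phi r < phi1) by (apply phi_lt_root; lra).
    rewrite Rabs_left by lra. lra.
Qed.
End FirstRoot.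
End Trajectory.

(** * Ground states *)

Section GroundState.
Variables (p M : R) (u : R -> R).
Hypothesis hp : 1 < p.
Hypothesis Hgs : is_ground_state p M u.

Let HC2 : forall r, C2_at u r := proj1 Hgs.
Let Hdu0 : Derive u 0 = 0 := proj1 (proj2 Hgs).
Let Hnn : forall r, 0 <= r -> 0 <= u r := proj1 (proj2 (proj2 Hgs)).
Let Hnz : exists r, 0 <= r /\ u r <> 0 := proj1 (proj2 (proj2 (proj2 Hgs))).
Let Hode : forall r, 0 < r -> solves_at p M u r := proj2 (proj2 (proj2 (proj2 Hgs))).

Lemma is_derive_u r : is_derive u r (Derive u r).
Proof. apply Derive_correct, (HC2 r). Qed.

Lemma is_derive_du r : is_derive (Derive u) r (Derive (Derive u) r).
Proof. apply Derive_correct, (HC2 r). Qed.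

Lemma continuity_pt_u r : continuity_pt u r.
Proof. exact (is_derive_continuity_pt _ _ _ (is_derive_u r)). Qed.

Lemma continuity_pt_du r : continuity_pt (Derive u) r.
Proof. exact (is_derive_continuity_pt _ _ _ (is_derive_du r)). Qed.

Lemma ode_nonneg r : 0 <= r -> - Derive (Derive u) r =
  pw (Rabs (u r)) (p - 1) * u r + M * pw (Rabs (Derive u r)) (qexp p).
Proof.
  intros Hr. destruct (Req_dec r 0) as [-> | Hne]; [|apply (Hode r); lra].
  apply (continuity_pt_eq_right (fun r => - Derive (Derive u) r)
    (fun r => pw (Rabs (u r)) (p - 1) * u r + M * pw (Rabs (Derive u r)) (qexp p))); [| |apply Hode].
  - apply continuity_pt_opp, continuity_pt_filterlim, (HC2 0).
  - pose proof (qexp_gt1 p hp).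
    apply continuity_pt_plus; apply continuity_pt_mult; try apply continuity_pt_cst.
    + apply (continuity_pt_comp u (fun x => pw (Rabs x) (p - 1)));
        [apply continuity_pt_u | apply continuity_pt_pw_Rabs; lra].
    + apply continuity_pt_u.
    + apply (continuity_pt_comp (Derive u) (fun x => pw (Rabs x) (qexp p)));
        [apply continuity_pt_du | apply continuity_pt_pw_Rabs; lra].
Qed.

Definition energy r := Derive u r * Derive u r + u r * u r.
Definition denergy r := 2 * Derive u r * Derive (Derive u) r + 2 * u r * Derive u r.

Lemma is_derive_energy r : is_derive energy r (denergy r).
Proof.
  unfold energy, denergy.
  apply (is_derive_val _ _ ((Derive (Derive u) r * Derive u r + Derive u r * Derive (Derive u) r)
     + (Derive u r * u r + u r * Derive u r))); [ring|].
  apply (is_derive_plus (fun r => Derive u r * Derive u r) (fun r => u r * u r));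
    apply is_derive_Rmult; apply is_derive_du || apply is_derive_u.
Qed.

Lemma denergy_le (U V W K : R) : 0 <= U <= K -> Rabs V <= K ->
  - W = pw U (p - 1) * U + M * pw (Rabs V) (qexp p) ->
  Rabs (2 * V * W + 2 * U * V) <=
    (1 + pw K (p - 1) + 2 * Rabs M * pw K (qexp p - 1)) * (V * V + U * U).
Proof.
  intros HU HV HW. pose proof (qexp_gt1 p hp).
  replace (2 * V * W + 2 * U * V) with
    (2 * V * U + - (pw U (p - 1) * (2 * V * U)) + - (2 * M * (V * pw (Rabs V) (qexp p))))
    by (rewrite <- (Ropp_involutive W), HW; ring).
  assert (HA : Rabs (V * pw (Rabs V) (qexp p)) = pw (Rabs V) (qexp p - 1) * (V * V)).
  { rewrite Rabs_mult, (Rabs_right (pw _ _)) by (apply Rle_ge, pw_ge0).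
    rewrite mult_pw by apply Rabs_pos. rewrite <- Rabs_mult, (Rabs_right (V * V)) by nra. reflexivity. }
  assert (Hp1 : pw U (p - 1) <= pw K (p - 1)) by (apply pw_le_compat; lra).
  assert (Hq1 : pw (Rabs V) (qexp p - 1) <= pw K (qexp p - 1))
    by (apply pw_le_compat; [lra | split; [apply Rabs_pos | auto]]).
  assert (H2 : Rabs (2 * V * U) <= V * V + U * U).
  { rewrite !Rabs_mult, (Rabs_right 2), (Rabs_right U) by lra.
    assert (Rabs V * Rabs V = V * V) by (rewrite <- Rabs_mult; apply Rabs_right; nra).
    pose proof (Rle_0_sqr (Rabs V - U)). unfold Rsqr in *. nra. }
  set (E := V * V + U * U) in *.
  assert (H3 : Rabs (pw U (p - 1) * (2 * V * U)) <= pw K (p - 1) * E).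
  { rewrite Rabs_mult, (Rabs_right (pw _ _)) by (apply Rle_ge, pw_ge0).
    apply Rmult_le_compat; try apply pw_ge0; try apply Rabs_pos; auto. }
  assert (H4 : Rabs (2 * M * (V * pw (Rabs V) (qexp p))) <= 2 * Rabs M * (pw K (qexp p - 1) * E)).
  { rewrite Rabs_mult, HA, Rabs_mult, (Rabs_right 2) by lra.
    pose proof (Rabs_pos M). pose proof (pw_ge0 (Rabs V) (qexp p - 1)).
    apply Rmult_le_compat_l; [lra|]. apply Rmult_le_compat; unfold E; try nra. }
  eapply Rle_trans; [apply Rabs_triang|].
  eapply Rle_trans; [apply Rplus_le_compat_r, Rabs_triang|].
  rewrite !Rabs_Ropp.
  replace ((1 + pw K (p - 1) + 2 * Rabs M * pw K (qexp p - 1)) * E)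
    with (E + pw K (p - 1) * E + 2 * Rabs M * (pw K (qexp p - 1) * E)) by ring. lra.
Qed.

Lemma energy_zero_iff x r : 0 <= x <= r -> energy x = 0 <-> energy r = 0.
Proof.
  intros Hxr.
  destruct (continuity_ab_maj (fun t => Rabs (u t) + Rabs (Derive u t)) 0 r ltac:(lra)) as [m [Hm Hm0]].
  { intros c Hc. apply continuity_pt_plus; apply (continuity_pt_comp _ Rabs);
      try apply Rcontinuity_abs; [apply continuity_pt_u | apply continuity_pt_du]. }
  set (K := Rabs (u m) + Rabs (Derive u m)) in Hm.
  assert (HK : 0 <= K) by (pose proof (Rabs_pos (u m)); pose proof (Rabs_pos (Derive u m)); unfold K; lra).
  apply (gronwall_zero_iff energy denergy (1 + pw K (p - 1) + 2 * Rabs M * pw K (qexp p - 1))); try lra.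
  - pose proof (pw_ge0 K (p - 1)). pose proof (pw_ge0 K (qexp p - 1)). pose proof (Rabs_pos M).
    assert (0 <= Rabs M * pw K (qexp p - 1)) by (apply Rmult_le_pos; lra). lra.
  - intros t Ht. apply is_derive_energy.
  - intros t Ht. unfold energy. nra.
  - intros t Ht. specialize (Hm t ltac:(lra)). assert (HU : 0 <= u t) by (apply Hnn; lra).
    rewrite (Rabs_right (u t)) in Hm by lra. pose proof (Rabs_pos (Derive u t)).
    apply denergy_le; [lra | lra |].
    rewrite (ode_nonneg t ltac:(lra)), (Rabs_right (u t)) by lra. reflexivity.
Qed.

Lemma u_0_pos : 0 < u 0.
Proof.
  destruct (Rle_lt_or_eq_dec 0 (u 0) (Hnn 0 (Rle_refl 0))) as [H|H]; auto. exfalso.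
  destruct Hnz as [r [Hr Hur]].
  assert (E0 : energy 0 = 0) by (unfold energy; rewrite Hdu0, <- H; ring).
  apply Hur. apply (energy_zero_iff 0 r ltac:(lra)) in E0. unfold energy in E0. nra.
Qed.

Lemma u_pos r : 0 <= r -> 0 < u r.
Proof.
  intros Hr. destruct (Rle_lt_or_eq_dec 0 (u r) (Hnn r Hr)) as [H|H]; auto. exfalso.
  destruct (Req_dec r 0) as [-> | Hr0]; [pose proof u_0_pos; lra|].
  (* an interior minimum: [u'(r) = 0], so the energy vanishes at [r], hence at [0] *)
  assert (Hd : Derive u r = 0).
  { assert (pr : derivable_pt u r) by (exists (Derive u r); apply is_derive_Reals, is_derive_u).
    rewrite <- (deriv_minimum u 0 (r + 1) r pr ltac:(lra) ltac:(lra)).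
    2:{ intros x Hx1 Hx2. rewrite <- H. apply Hnn; lra. }
    destruct pr as [l Hl]. simpl. apply (uniqueness_limite u r); auto.
    apply is_derive_Reals, is_derive_u. }
  assert (Er : energy r = 0) by (unfold energy; rewrite Hd, <- H; ring).
  apply (energy_zero_iff 0 r ltac:(lra)) in Er. unfold energy in Er.
  pose proof u_0_pos. nra.
Qed.

Lemma ddu_neg_of_du_zero r : 0 <= r -> Derive u r = 0 -> Derive (Derive u) r < 0.
Proof.
  intros Hr Hz. assert (H0 := ode_nonneg r Hr). pose proof (u_pos r Hr).
  rewrite Hz, Rabs_R0, (pw_of_nonpos 0), Rabs_right, pw_of_pos in H0 by lra.
  pose proof (exp_pos ((p - 1) * ln (u r))). nra.
Qed.

Lemma du_neg r : 0 < r -> Derive u r < 0.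
Proof.
  intros Hr. apply (neg_of_no_first_zero (Derive u) 0); auto.
  - intros t Ht. apply continuity_pt_du.
  - destruct (derive_neg_sign_near (Derive u) 0 _ (is_derive_du 0) (ddu_neg_of_du_zero 0 (Rle_refl 0) Hdu0))
      as [d [Hd [Hd1 _]]].
    exists d; split; auto. intros t Ht. rewrite <- Hdu0. apply Hd1. lra.
  - intros r1 Hr1 Hz Hbelow.
    destruct (derive_neg_sign_near (Derive u) r1 _ (is_derive_du r1) (ddu_neg_of_du_zero r1 ltac:(lra) Hz))
      as [d [Hd [_ Hd2]]].
    set (t := Rmax (r1 - d / 2) (r1 / 2)).
    assert (Ht : r1 - d / 2 <= t /\ r1 / 2 <= t /\ t < r1).
    { unfold t. split; [apply Rmax_l | split; [apply Rmax_r | apply Rmax_lub_lt; lra]]. }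
    specialize (Hd2 t ltac:(lra)). specialize (Hbelow t ltac:(lra)). lra.
Qed.

Definition y_u r := ln (u r).
Definition phi_u r := - Derive u r * exp (- bexp p * ln (u r)).

Lemma is_derive_y_u r : 0 < r -> is_derive y_u r (- phi_u r * exp ((bexp p - 1) * y_u r)).
Proof.
  intros Hr. assert (Hu := u_pos r ltac:(lra)).
  apply (is_derive_val _ _ (Derive u r / u r)).
  - unfold phi_u, y_u.
    replace (- (- Derive u r * exp (- bexp p * ln (u r))) * exp ((bexp p - 1) * ln (u r)))
      with (Derive u r * (exp (- bexp p * ln (u r)) * exp ((bexp p - 1) * ln (u r)))) by ring.
    rewrite <- exp_plus. replace (- bexp p * ln (u r) + (bexp p - 1) * ln (u r)) with (- ln (u r)) by ring.
    rewrite exp_Ropp, exp_ln by lra. unfold Rdiv; ring.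
  - apply is_derive_ln_comp; auto. apply is_derive_u.
Qed.

Lemma is_derive_phi_u r : 0 < r -> is_derive phi_u r (exp ((bexp p - 1) * y_u r) * G p M (phi_u r)).
Proof.
  intros Hr. assert (HU := u_pos r ltac:(lra)). assert (HV := du_neg r Hr).
  eapply is_derive_val; [|apply (is_derive_Rmult (fun r => - Derive u r) (fun r => exp (- bexp p * ln (u r))))].
  2: apply (is_derive_opp (Derive u)), is_derive_du.
  2: apply is_derive_exp_comp, is_derive_ln_comp, is_derive_u; auto.
  change (opp (Derive (Derive u) r)) with (- Derive (Derive u) r).
  fold (phi_u r). unfold y_u.
  set (L := ln (u r)) in *. set (U := u r) in *. set (V := Derive u r) in *. set (ph := phi_u r) in *.
  set (A := exp ((bexp p - 1) * L)) in *.
  assert (HUe : U = exp L) by (unfold L, U; rewrite exp_ln; auto).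
  assert (HA : 0 < A) by apply exp_pos.
  assert (Hbl : exp (- bexp p * L) = / (A * U)).
  { rewrite HUe. unfold A. rewrite <- exp_plus, <- exp_Ropp. f_equal. ring. }
  assert (Hph : ph = - V / (A * U)).
  { change ph with (- V * exp (- bexp p * L)). rewrite Hbl. field. nra. }
  assert (Hphp : 0 < ph) by (rewrite Hph; apply Rdiv_lt_0_compat; nra).
  assert (HV2 : - V = ph * (A * U)) by (rewrite Hph; field; nra).
  assert (Hode' := ode_nonneg r ltac:(lra)). fold U V in Hode'.
  rewrite (Rabs_right U), (Rabs_left V), HV2, (pw_mult_exp ph (A * U) (qexp p)) in Hode' by nra.
  assert (E1 : exp (qexp p * ln (A * U)) = A * A * U).
  { assert (EAU : A * U = exp (bexp p * L)) by (rewrite HUe; unfold A; rewrite <- exp_plus; f_equal; ring).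
    assert (EAAU : A * A * U = exp (p * L))
      by (rewrite HUe; unfold A; rewrite <- !exp_plus; f_equal; unfold bexp; field).
    rewrite EAAU, EAU, ln_exp. f_equal. rewrite <- Rmult_assoc, (Rmult_comm (qexp p)), bexp_qexp; auto. }
  assert (E2 : pw U (p - 1) = A * A).
  { rewrite pw_of_pos by lra. unfold A. rewrite <- exp_plus. f_equal. fold L. unfold bexp; field. }
  rewrite E1, E2 in Hode'.
  unfold G. rewrite (Rabs_right ph) by lra. rewrite Hbl.
  replace (- Derive (Derive u) r) with (A * A * U + M * (pw ph (qexp p) * (A * A * U))) by lra.
  replace (- bexp p * (V / U) * / (A * U)) with (bexp p * (- V) / (U * (A * U))) by (field; nra).
  rewrite HV2. field. nra.
Qed.

Lemma continuity_pt_y_u r : 0 <= r -> continuity_pt y_u r.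
Proof.
  intros Hr. apply (continuity_pt_comp u ln); [apply continuity_pt_u | apply continuity_pt_ln, u_pos; auto].
Qed.

Lemma continuity_pt_phi_u r : 0 <= r -> continuity_pt phi_u r.
Proof.
  intros Hr. apply continuity_pt_mult; [apply continuity_pt_opp, continuity_pt_du|].
  apply (continuity_pt_comp (fun r => - bexp p * ln (u r)) exp); [|apply continuity_pt_exp].
  apply continuity_pt_mult; [apply continuity_pt_cst | apply continuity_pt_y_u; auto].
Qed.

Lemma phi_u_0 : phi_u 0 = 0.
Proof. unfold phi_u. rewrite Hdu0. ring. Qed.

Lemma phi_u_pos r : 0 < r -> 0 < phi_u r.
Proof. intros Hr. unfold phi_u. pose proof (du_neg r Hr). pose proof (exp_pos (- bexp p * ln (u r))). nra. Qed.

Lemma ground_state_M_le : M <= - mu_star p.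
Proof.
  destruct (Rle_lt_dec M (- mu_star p)) as [H|H]; auto. exfalso.
  destruct (G_lower_bound p M hp H) as [g [Hg HG]].
  exact (no_trajectory_of_G_lower_bound p M y_u phi_u hp is_derive_y_u is_derive_phi_u
    continuity_pt_phi_u phi_u_pos g Hg HG).
Qed.

Lemma ground_state_equiv_infty : exists X2, is_X2 p M X2 /\ equiv_infty u (U_of p X2).
Proof.
  destruct (first_root p M hp ground_state_M_le) as [phi1 [H1 [G1 Hpos]]].
  exists (X_of_phi p phi1). split; [apply is_X2_of_first_root; auto; lra|].
  assert (Hcvg := phi_cvg_root p M y_u phi_u hp is_derive_y_u is_derive_phi_u continuity_pt_y_u
    continuity_pt_phi_u phi_u_0 phi_u_pos phi1 ltac:(lra) G1 Hpos).
  assert (Ha := exp_y_equiv_p_infty p hp y_u phi_u 0 phi1 ltac:(lra) is_derive_y_u Hcvg).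
  unfold equiv_infty. eapply is_lim_ext_loc; [|exact Ha].
  exists 0. intros r Hr. unfold y_u. rewrite exp_ln; auto. apply u_pos; lra.
Qed.
End GroundState.

(** * Solutions from trajectories *)

(* A trajectory written as [y = - Psi (phi)] gives the solution [u = exp y]. *)
Section FromTrajectory.
Variables (p M : R) (Psi phi : R -> R) (I : R -> Prop).
Hypothesis hp : 1 < p.
Hypothesis HI : forall r, I r -> exists d, 0 < d /\ forall s, Rabs (s - r) < d -> I s.
Hypothesis Hphi : forall r, I r -> is_derive phi r (exp (- (bexp p - 1) * Psi (phi r)) * G p M (phi r)).
Hypothesis HPsi : forall r, I r -> is_derive Psi (phi r) (phi r / G p M (phi r)).
Hypothesis HG : forall r, I r -> G p M (phi r) <> 0.

Definition u_traj r := exp (- Psi (phi r)).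
Definition du_traj r := - phi r * exp (- bexp p * Psi (phi r)).
Definition ddu_traj r := - exp (- p * Psi (phi r)) * (1 + M * pw (Rabs (phi r)) (qexp p)).

Lemma is_derive_Psi_phi r : I r ->
  is_derive (fun r => Psi (phi r)) r (exp (- (bexp p - 1) * Psi (phi r)) * phi r).
Proof.
  intros Hr. eapply is_derive_val; [|apply (is_derive_Rcomp Psi phi r _ _ (HPsi r Hr) (Hphi r Hr))].
  specialize (HG r Hr). field. auto.
Qed.

Lemma is_derive_u_traj r : I r -> is_derive u_traj r (du_traj r).
Proof.
  intros Hr. unfold u_traj, du_traj.
  apply (is_derive_ext (fun r => exp (-1 * Psi (phi r)))); [intros t; f_equal; ring|].
  eapply is_derive_val; [|apply (is_derive_exp_comp (fun r => Psi (phi r)) r _ (-1) (is_derive_Psi_phi r Hr))].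
  replace (- bexp p * Psi (phi r)) with (- (bexp p - 1) * Psi (phi r) + -1 * Psi (phi r)) by ring.
  rewrite exp_plus. ring.
Qed.

Lemma is_derive_du_traj r : I r -> is_derive du_traj r (ddu_traj r).
Proof.
  intros Hr. unfold du_traj, ddu_traj.
  eapply is_derive_val; [|apply (is_derive_Rmult (fun r => - phi r) (fun r => exp (- bexp p * Psi (phi r))))].
  2: apply (is_derive_opp phi), Hphi; auto.
  2: apply (is_derive_exp_comp (fun r => Psi (phi r))), is_derive_Psi_phi; auto.
  change (opp (exp (- (bexp p - 1) * Psi (phi r)) * G p M (phi r)))
    with (- (exp (- (bexp p - 1) * Psi (phi r)) * G p M (phi r))).
  set (P := Psi (phi r)). set (f := phi r).
  assert (E1 : exp (- (bexp p - 1) * P) * exp (- bexp p * P) = exp (- p * P)).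
  { rewrite <- exp_plus. f_equal. unfold bexp. field. }
  transitivity (- (exp (- (bexp p - 1) * P) * exp (- bexp p * P)) * (G p M f - bexp p * f ^ 2)); [ring|].
  rewrite E1. unfold G. ring.
Qed.

Lemma Derive_u_traj r : I r -> Derive u_traj r = du_traj r.
Proof. intros Hr. apply is_derive_unique, is_derive_u_traj; auto. Qed.

Lemma is_derive_Derive_u_traj r : I r -> is_derive (Derive u_traj) r (ddu_traj r).
Proof.
  intros Hr. apply (is_derive_ext_loc du_traj); [|apply is_derive_du_traj; auto].
  destruct (HI r Hr) as [d [Hd Hs]]. exists (mkposreal d Hd). intros s Hs'.
  symmetry. apply Derive_u_traj, Hs, Hs'.
Qed.

Lemma continuity_pt_ddu_traj r : I r -> continuity_pt ddu_traj r.
Proof.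
  intros Hr. pose proof (qexp_gt1 p hp).
  assert (Hc : continuity_pt phi r) by (apply (is_derive_continuity_pt _ _ _ (Hphi r Hr))).
  assert (HcP : continuity_pt (fun r => Psi (phi r)) r)
    by (apply (is_derive_continuity_pt _ _ _ (is_derive_Psi_phi r Hr))).
  unfold ddu_traj. apply continuity_pt_mult.
  - apply continuity_pt_opp, (continuity_pt_comp (fun r => - p * Psi (phi r)) exp); [|apply continuity_pt_exp].
    apply continuity_pt_mult; [apply continuity_pt_cst | exact HcP].
  - apply continuity_pt_plus; [apply continuity_pt_cst|].
    apply continuity_pt_mult; [apply continuity_pt_cst|].
    apply (continuity_pt_comp phi (fun x => pw (Rabs x) (qexp p))); auto. apply continuity_pt_pw_Rabs; lra.
Qed.

Lemma C2_at_u_traj r : I r -> C2_at u_traj r.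
Proof.
  intros Hr. split; [|split].
  - exists (du_traj r). apply is_derive_u_traj; auto.
  - exists (ddu_traj r). apply is_derive_Derive_u_traj; auto.
  - apply continuity_pt_filterlim, (continuity_pt_ext_loc ddu_traj); [|apply continuity_pt_ddu_traj; auto].
    destruct (HI r Hr) as [d [Hd Hs]]. exists (mkposreal d Hd). intros s Hs'.
    symmetry. apply is_derive_unique, is_derive_Derive_u_traj, Hs, Hs'.
Qed.

Lemma solves_at_u_traj r : I r -> solves_at p M u_traj r.
Proof.
  intros Hr. unfold solves_at. change (2 * p / (p + 1)) with (qexp p).
  rewrite (is_derive_unique _ _ _ (is_derive_Derive_u_traj r Hr)), Derive_u_traj by auto.
  unfold u_traj, du_traj, ddu_traj. set (P := Psi (phi r)). set (f := phi r).
  rewrite (Rabs_right (exp (- P))) by (apply Rle_ge, Rlt_le, exp_pos).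
  rewrite (pw_of_pos (exp (- P))), ln_exp by apply exp_pos.
  rewrite Rabs_mult, Rabs_Ropp, (Rabs_right (exp _)) by (apply Rle_ge, Rlt_le, exp_pos).
  rewrite pw_mult_exp, ln_exp by (try apply Rabs_pos; apply exp_pos).
  assert (E1 : exp ((p - 1) * - P) * exp (- P) = exp (- p * P)) by (rewrite <- exp_plus; f_equal; ring).
  assert (E2 : exp (qexp p * (- bexp p * P)) = exp (- p * P)).
  { f_equal. replace (qexp p * (- bexp p * P)) with (- (bexp p * qexp p) * P) by ring.
    rewrite (bexp_qexp p hp). ring. }
  rewrite E1, E2. ring.
Qed.
End FromTrajectory.

(* Along a trajectory [d(-y)/dphi = phi / G(phi)] and [dr/dphi = exp(-(bexp p - 1) y) / G(phi)]:
    integrating both gives [Psi] and the time [T] as functions of [phi], and [phi] is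
    recovered by inverting [T]. *)
Section GroundStateConstruction.
Variables (p M phi1 : R).
Hypothesis hp : 1 < p.
Hypothesis Hphi1 : 0 < phi1.
Hypothesis HG1 : G p M phi1 = 0.
Hypothesis Hpos : forall t, 0 <= t < phi1 -> 0 < G p M t.

Local Notation L := (lipG p M phi1).

Lemma G_Rabs t : G p M t = G p M (Rabs t).
Proof. destruct (Rle_lt_dec 0 t); [rewrite Rabs_right | rewrite Rabs_left, G_even]; auto; lra. Qed.

Lemma G_pos_sym t : - phi1 < t < phi1 -> 0 < G p M t.
Proof. intros Ht. rewrite G_Rabs. apply Hpos. split; [apply Rabs_pos | apply Rabs_def1; lra]. Qed.

Lemma G_le_lip_sym t : - phi1 < t < phi1 -> G p M t <= L * (phi1 - Rabs t).
Proof.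
  intros Ht. rewrite G_Rabs. eapply Rle_trans; [apply Rle_abs|].
  apply Rabs_G_le_below_root; auto. split; [apply Rabs_pos | apply Rlt_le, Rabs_def1; lra].
Qed.

Definition Psi_gs x := RInt (fun s => s / G p M s) 0 x.

Lemma is_derive_Psi_gs t : - phi1 < t < phi1 -> is_derive Psi_gs t (t / G p M t).
Proof.
  intros Ht. apply (is_derive_RInt_open (fun s => s / G p M s) 0 (- phi1) phi1); [lra| |lra].
  intros s Hs. pose proof (G_pos_sym s Hs).
  apply (continuity_pt_div (fun s => s) (G p M));
    solve [apply derivable_continuous_pt, derivable_pt_id | apply (continuity_pt_G p M hp) | lra].
Qed.

Lemma Psi_gs_nonneg t : - phi1 < t < phi1 -> 0 <= Psi_gs t.
Proof.
  intros Ht. assert (E0 : Psi_gs 0 = 0) by apply RInt_same.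
  assert (Hc : forall s, - phi1 < s < phi1 -> continuity_pt Psi_gs s)
    by (intros s Hs; apply (is_derive_continuity_pt _ _ _ (is_derive_Psi_gs s Hs))).
  destruct (Rle_lt_dec 0 t).
  - rewrite <- E0. apply (le_of_derive_nonneg Psi_gs (fun s => s / G p M s) 0 t); auto.
    + intros s Hs. apply is_derive_Psi_gs; lra.
    + intros s Hs. apply Hc; lra.
    + intros s Hs. apply Rdiv_le_0_compat; [lra | apply G_pos_sym; lra].
  - cut (- Psi_gs t <= - Psi_gs 0); [lra|].
    apply (le_of_derive_nonneg (fun x => - Psi_gs x) (fun s => - (s / G p M s)) t 0); try lra.
    + intros s Hs. apply (is_derive_opp Psi_gs), is_derive_Psi_gs; lra.
    + intros s Hs. apply continuity_pt_opp, Hc; lra.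
    + intros s Hs. pose proof (G_pos_sym s ltac:(lra)).
      assert (s / G p M s < 0) by (apply Rdiv_neg_pos; lra). lra.
Qed.

Definition T_gs x := RInt (fun s => exp ((bexp p - 1) * Psi_gs s) / G p M s) 0 x.

Lemma is_derive_T_gs t : - phi1 < t < phi1 ->
  is_derive T_gs t (exp ((bexp p - 1) * Psi_gs t) / G p M t).
Proof.
  intros Ht.
  apply (is_derive_RInt_open (fun s => exp ((bexp p - 1) * Psi_gs s) / G p M s) 0 (- phi1) phi1);
    [lra| |lra].
  intros s Hs. pose proof (G_pos_sym s Hs).
  apply (continuity_pt_div (fun s => exp ((bexp p - 1) * Psi_gs s)) (G p M)); try apply (continuity_pt_G p M hp); try lra.
  apply (continuity_pt_comp (fun s => (bexp p - 1) * Psi_gs s) exp); [|apply continuity_pt_exp].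
  apply continuity_pt_mult; [apply continuity_pt_cst | apply (is_derive_continuity_pt _ _ _ (is_derive_Psi_gs s Hs))].
Qed.

Lemma dT_gs_pos t : - phi1 < t < phi1 -> 0 < exp ((bexp p - 1) * Psi_gs t) / G p M t.
Proof. intros Ht. apply Rdiv_lt_0_compat; [apply exp_pos | apply G_pos_sym; auto]. Qed.

Lemma dT_gs_lower t : - phi1 < t < phi1 ->
  / (L * (phi1 - Rabs t)) <= exp ((bexp p - 1) * Psi_gs t) / G p M t.
Proof.
  intros Ht. assert (HG := G_pos_sym t Ht). assert (HGL := G_le_lip_sym t Ht).
  assert (He : 1 <= exp ((bexp p - 1) * Psi_gs t)).
  { rewrite <- exp_0 at 1. apply exp_le_compat. pose proof (Psi_gs_nonneg t Ht). pose proof (bexp_gt1 p hp).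
    apply Rmult_le_pos; lra. }
  unfold Rdiv. apply Rle_trans with (1 * / G p M t).
  - rewrite Rmult_1_l. apply Rinv_le_contravar; auto.
  - apply Rmult_le_compat_r; [apply Rlt_le, Rinv_0_lt_compat|]; lra.
Qed.

Lemma continuity_pt_T_gs t : - phi1 < t < phi1 -> continuity_pt T_gs t.
Proof. intros Ht. apply (is_derive_continuity_pt _ _ _ (is_derive_T_gs t Ht)). Qed.

Lemma T_gs_lt s t : - phi1 < s -> s < t -> t < phi1 -> T_gs s < T_gs t.
Proof.
  apply (lt_of_derive_pos_interv T_gs (fun t => exp ((bexp p - 1) * Psi_gs t) / G p M t) (- phi1) phi1);
    [apply is_derive_T_gs | apply dT_gs_pos].
Qed.

(* [T] has logarithmic singularities at [+- phi1], since [G] vanishes at most linearly. *)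
Lemma T_gs_ge_log t : 0 <= t < phi1 -> / L * (ln phi1 - ln (phi1 - t)) <= T_gs t.
Proof.
  intros Ht. pose proof (lipG_pos p M hp phi1 Hphi1).
  replace (T_gs t) with (T_gs t - T_gs 0) by (unfold T_gs; rewrite RInt_same; ring).
  replace (/ L * (ln phi1 - ln (phi1 - t))) with ((- / L * ln (phi1 - t)) - (- / L * ln (phi1 - 0)))
    by (rewrite Rminus_0_r; ring).
  apply (increment_le_of_derive_le (fun x => - / L * ln (phi1 - x)) T_gs (fun x => / (L * (phi1 - x)))
     (fun x => exp ((bexp p - 1) * Psi_gs x) / G p M x) 0 t); try lra.
  - intros x Hx. auto_derive; [lra | field; split; lra].
  - intros x Hx. apply is_derive_T_gs; lra.
  - intros x Hx. apply continuity_pt_mult; [apply continuity_pt_cst|].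
    apply (continuity_pt_comp (fun x => phi1 - x) ln); [|apply continuity_pt_ln; lra].
    apply continuity_pt_minus; [apply continuity_pt_cst | apply derivable_continuous_pt, derivable_pt_id].
  - intros x Hx. apply continuity_pt_T_gs; lra.
  - intros x Hx. assert (H' := dT_gs_lower x ltac:(lra)). rewrite Rabs_right in H' by lra. exact H'.
Qed.

Lemma T_gs_le_log t : - phi1 < t <= 0 -> T_gs t <= - (/ L * (ln phi1 - ln (phi1 + t))).
Proof.
  intros Ht. pose proof (lipG_pos p M hp phi1 Hphi1).
  assert (Hinc : (/ L * ln (phi1 + 0)) - (/ L * ln (phi1 + t)) <= T_gs 0 - T_gs t).
  { apply (increment_le_of_derive_le (fun x => / L * ln (phi1 + x)) T_gs (fun x => / (L * (phi1 + x)))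
     (fun x => exp ((bexp p - 1) * Psi_gs x) / G p M x) t 0); try lra.
    - intros x Hx. auto_derive; [lra | field; split; lra].
    - intros x Hx. apply is_derive_T_gs; lra.
    - intros x Hx. apply continuity_pt_mult; [apply continuity_pt_cst|].
      apply (continuity_pt_comp (fun x => phi1 + x) ln); [|apply continuity_pt_ln; lra].
      apply continuity_pt_plus; [apply continuity_pt_cst | apply derivable_continuous_pt, derivable_pt_id].
    - intros x Hx. apply continuity_pt_T_gs; lra.
    - intros x Hx. assert (H' := dT_gs_lower x ltac:(lra)). rewrite Rabs_left in H' by lra.
      replace (phi1 - - x) with (phi1 + x) in H' by ring. exact H'. }
  unfold T_gs at 1 in Hinc. rewrite RInt_same, Rplus_0_r in Hinc. lra.
Qed.

Lemma T_gs_onto y : exists t1 t2, - phi1 < t1 /\ t1 < t2 /\ t2 < phi1 /\ T_gs t1 < y /\ y < T_gs t2.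
Proof.
  pose proof (lipG_pos p M hp phi1 Hphi1).
  set (K := Rabs y + 1). set (t2 := phi1 * (1 - exp (- L * K))).
  assert (HK : 0 < K) by (unfold K; pose proof (Rabs_pos y); lra).
  assert (He : 0 < exp (- L * K) < 1).
  { split; [apply exp_pos|]. rewrite <- exp_0. apply exp_increasing. nra. }
  assert (Ht2 : 0 < t2 < phi1) by (unfold t2; split; nra).
  assert (Eln : ln phi1 - ln (phi1 - t2) = L * K).
  { replace (phi1 - t2) with (phi1 * exp (- L * K)) by (unfold t2; ring).
    rewrite ln_mult, ln_exp by (auto; apply exp_pos). ring. }
  assert (Hy : - K < y < K) by (unfold K; pose proof (Rle_abs y); pose proof (Rle_abs (- y));
    rewrite Rabs_Ropp in *; lra).
  exists (- t2), t2. repeat split; try lra.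
  - assert (H' := T_gs_le_log (- t2) ltac:(lra)).
    replace (phi1 + - t2) with (phi1 - t2) in H' by ring. rewrite Eln in H'.
    replace (/ L * (L * K)) with K in H' by (field; lra). lra.
  - assert (H' := T_gs_ge_log t2 ltac:(lra)). rewrite Eln in H'.
    replace (/ L * (L * K)) with K in H' by (field; lra). lra.
Qed.

Lemma ground_state_of_first_root : exists u, is_ground_state p M u.
Proof.
  destruct (inverse_exists T_gs (- phi1) phi1 (fun _ => True)) as [g Hg].
  { intros t Ht. apply continuity_pt_T_gs; auto. }
  { intros y _. apply T_gs_onto. }
  assert (Hgd : forall r, True -> is_derive g r (exp (- (bexp p - 1) * Psi_gs (g r)) * G p M (g r))).
  { intros r _. destruct (Hg r I) as [Hgr _].
    eapply is_derive_val;
      [|apply (is_derive_inverse T_gs (fun t => exp ((bexp p - 1) * Psi_gs t) / G p M t) g (- phi1) phi1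
        (fun _ => True) is_derive_T_gs dT_gs_pos (fun y _ => Hg y I) r I)];
      [|exists 1; split; [lra | auto]].
    pose proof (G_pos_sym (g r) Hgr). pose proof (exp_pos ((bexp p - 1) * Psi_gs (g r))).
    rewrite Ropp_mult_distr_l_reverse, exp_Ropp. field. lra. }
  assert (HI : forall r : R, True -> exists d, 0 < d /\ forall s, Rabs (s - r) < d -> True)
    by (intros r _; exists 1; split; [lra | auto]).
  assert (HPsi : forall r, True -> is_derive Psi_gs (g r) (g r / G p M (g r)))
    by (intros r _; apply is_derive_Psi_gs, Hg; auto).
  assert (HG : forall r, True -> G p M (g r) <> 0)
    by (intros r _; assert (0 < G p M (g r)) by (apply G_pos_sym, Hg; auto); lra).
  assert (Hg0 : g 0 = 0).
  { destruct (Hg 0 I) as [Hg0 HT0]. replace 0 with (T_gs 0) in HT0 at 2 by apply RInt_same.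
    destruct (Rtotal_order (g 0) 0) as [Hlt|[Heq|Hgt]]; auto.
    - assert (T_gs (g 0) < T_gs 0) by (apply T_gs_lt; lra). lra.
    - assert (T_gs 0 < T_gs (g 0)) by (apply T_gs_lt; lra). lra. }
  exists (u_traj Psi_gs g). split; [|split; [|split; [|split]]].
  - intros r. apply (C2_at_u_traj p M Psi_gs g (fun _ => True)); auto.
  - rewrite (Derive_u_traj p M Psi_gs g (fun _ => True) Hgd HPsi HG 0 I). unfold du_traj.
    rewrite Hg0. ring.
  - intros r _. apply Rlt_le, exp_pos.
  - exists 0. split; [lra|]. pose proof (exp_pos (- Psi_gs (g 0))). unfold u_traj. lra.
  - intros r _. apply (solves_at_u_traj p M Psi_gs g (fun _ => True)); auto.
Qed.
End GroundStateConstruction.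

Lemma ground_state_exists p M : 1 < p -> M <= - mu_star p -> exists u, is_ground_state p M u.
Proof.
  intros hp HM. destruct (first_root p M hp HM) as [phi1 [H1 [G1 Hpos]]].
  apply (ground_state_of_first_root p M phi1); auto; lra.
Qed.

(* Same construction on [(phi1, phi2)], where [G < 0]: now the time [T] is bounded above by
    some [S] as [phi -> phi2], and [r = S - T(phi)] runs over [(0, oo)]. *)
Section SingularConstruction.
Variables (p M phi1 phi2 : R).
Hypothesis hp : 1 < p.
Hypothesis H12 : 0 < phi1 < phi2.
Hypothesis HG1 : G p M phi1 = 0.
Hypothesis HG2 : G p M phi2 = 0.
Hypothesis Hneg : forall t, phi1 < t < phi2 -> G p M t < 0.

Local Notation L := (lipG p M phi2).
Local Notation phi_mid := ((phi1 + phi2) / 2).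

Lemma neg_G_le_lip_phi1 t : phi1 <= t <= phi2 -> - G p M t <= L * (t - phi1).
Proof.
  intros Ht. assert (H := Rabs_G_le_above_root p M hp phi1 phi2 t HG1 ltac:(lra) ltac:(lra)).
  apply Rabs_le_between in H. lra.
Qed.

Lemma neg_G_le_lip_phi2 t : phi1 <= t <= phi2 -> - G p M t <= L * (phi2 - t).
Proof.
  intros Ht. assert (H := Rabs_G_le_below_root p M hp phi2 t HG2 ltac:(lra)).
  apply Rabs_le_between in H. lra.
Qed.

Definition Psi_sg x := RInt (fun s => s / G p M s) phi_mid x.

Lemma is_derive_Psi_sg t : phi1 < t < phi2 -> is_derive Psi_sg t (t / G p M t).
Proof.
  intros Ht. apply (is_derive_RInt_open (fun s => s / G p M s) phi_mid phi1 phi2); [lra| |lra].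
  intros s Hs. pose proof (Hneg s Hs).
  apply (continuity_pt_div (fun s => s) (G p M)); try apply (continuity_pt_G p M hp); try lra.
  apply derivable_continuous_pt, derivable_pt_id.
Qed.

Lemma continuity_pt_Psi_sg t : phi1 < t < phi2 -> continuity_pt Psi_sg t.
Proof. intros Ht. apply (is_derive_continuity_pt _ _ _ (is_derive_Psi_sg t Ht)). Qed.

Lemma Psi_sg_nonneg t : phi1 < t <= phi_mid -> 0 <= Psi_sg t.
Proof.
  intros Ht. replace 0 with (Psi_sg phi_mid) by apply RInt_same.
  cut (- Psi_sg t <= - Psi_sg phi_mid); [lra|].
  apply (le_of_derive_nonneg (fun x => - Psi_sg x) (fun s => - (s / G p M s)) t phi_mid); try lra.
  - intros s Hs. apply (is_derive_opp Psi_sg), is_derive_Psi_sg; lra.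
  - intros s Hs. apply continuity_pt_opp, continuity_pt_Psi_sg; lra.
  - intros s Hs. pose proof (Hneg s ltac:(lra)).
    assert (s / G p M s < 0) by (apply Rdiv_pos_neg; lra). lra.
Qed.

Lemma Psi_sg_le_log t : phi_mid <= t < phi2 ->
  Psi_sg t <= phi_mid / L * (ln (phi2 - t) - ln (phi2 - phi_mid)).
Proof.
  intros Ht. pose proof (lipG_pos p M hp phi2 ltac:(lra)).
  replace (Psi_sg t) with (Psi_sg t - Psi_sg phi_mid) by (unfold Psi_sg at 2; rewrite RInt_same; ring).
  replace (phi_mid / L * (ln (phi2 - t) - ln (phi2 - phi_mid))) with
    (phi_mid / L * ln (phi2 - t) - phi_mid / L * ln (phi2 - phi_mid)) by ring.
  apply (increment_le_of_derive_le Psi_sg (fun x => phi_mid / L * ln (phi2 - x)) (fun s => s / G p M s)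
     (fun x => - (phi_mid / (L * (phi2 - x)))) phi_mid t); try lra.
  - intros x Hx. apply is_derive_Psi_sg; lra.
  - intros x Hx. auto_derive; [lra | field; split; lra].
  - intros x Hx. apply continuity_pt_Psi_sg; lra.
  - intros x Hx. apply continuity_pt_mult; [apply continuity_pt_cst|].
    apply (continuity_pt_comp (fun x => phi2 - x) ln); [|apply continuity_pt_ln; lra].
    apply continuity_pt_minus; [apply continuity_pt_cst | apply derivable_continuous_pt, derivable_pt_id].
  - intros x Hx. assert (HG := Hneg x ltac:(lra)). assert (HL := neg_G_le_lip_phi2 x ltac:(lra)).
    assert (phi_mid / (L * (phi2 - x)) <= x / (- G p M x)).
    { unfold Rdiv. apply Rmult_le_compat; try lra.
      - apply Rlt_le, Rinv_0_lt_compat. nra.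
      - apply Rinv_le_contravar; lra. }
    replace (x / G p M x) with (- (x / - G p M x)) by (field; lra). lra.
Qed.

Definition T_sg x := RInt (fun s => exp ((bexp p - 1) * Psi_sg s) / (- G p M s)) phi_mid x.

Lemma is_derive_T_sg t : phi1 < t < phi2 ->
  is_derive T_sg t (exp ((bexp p - 1) * Psi_sg t) / (- G p M t)).
Proof.
  intros Ht.
  apply (is_derive_RInt_open (fun s => exp ((bexp p - 1) * Psi_sg s) / (- G p M s)) phi_mid phi1 phi2);
    [lra| |lra].
  intros s Hs. pose proof (Hneg s Hs).
  apply (continuity_pt_div (fun s => exp ((bexp p - 1) * Psi_sg s)) (fun s => - G p M s)); try lra.
  - apply (continuity_pt_comp (fun s => (bexp p - 1) * Psi_sg s) exp); [|apply continuity_pt_exp].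
    apply continuity_pt_mult; [apply continuity_pt_cst | apply continuity_pt_Psi_sg; auto].
  - apply continuity_pt_opp, (continuity_pt_G p M hp).
Qed.

Lemma dT_sg_pos t : phi1 < t < phi2 -> 0 < exp ((bexp p - 1) * Psi_sg t) / (- G p M t).
Proof. intros Ht. apply Rdiv_lt_0_compat; [apply exp_pos | pose proof (Hneg t Ht); lra]. Qed.

Lemma continuity_pt_T_sg t : phi1 < t < phi2 -> continuity_pt T_sg t.
Proof. intros Ht. apply (is_derive_continuity_pt _ _ _ (is_derive_T_sg t Ht)). Qed.

Lemma T_sg_lt s t : phi1 < s -> s < t -> t < phi2 -> T_sg s < T_sg t.
Proof.
  apply (lt_of_derive_pos_interv T_sg (fun t => exp ((bexp p - 1) * Psi_sg t) / (- G p M t)) phi1 phi2);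
    [apply is_derive_T_sg | apply dT_sg_pos].
Qed.

(* Near [phi2] the integrand of [T] is bounded by [- (d/dt) e^((bexp p - 1) Psi) / ((bexp p - 1) phi_mid)],
    so [T] stays bounded there. *)
Lemma T_sg_bounded t : phi_mid <= t < phi2 -> T_sg t <= / ((bexp p - 1) * phi_mid).
Proof.
  intros Ht. pose proof (bexp_gt1 p hp).
  set (k := (bexp p - 1) * phi_mid). assert (Hk : 0 < k) by (unfold k; nra).
  assert (Hinc : T_sg t - T_sg phi_mid <=
      (-1 / k) * exp ((bexp p - 1) * Psi_sg t) - (-1 / k) * exp ((bexp p - 1) * Psi_sg phi_mid)).
  { apply (increment_le_of_derive_le T_sg (fun x => (-1 / k) * exp ((bexp p - 1) * Psi_sg x))
      (fun s => exp ((bexp p - 1) * Psi_sg s) / (- G p M s))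
      (fun x => (-1 / k) * ((bexp p - 1) * (x / G p M x) * exp ((bexp p - 1) * Psi_sg x))) phi_mid t);
      try lra.
    - intros x Hx. apply is_derive_T_sg; lra.
    - intros x Hx. apply is_derive_scal, is_derive_exp_comp, is_derive_Psi_sg; lra.
    - intros x Hx. apply continuity_pt_T_sg; lra.
    - intros x Hx. apply continuity_pt_mult; [apply continuity_pt_cst|].
      apply (continuity_pt_comp (fun s => (bexp p - 1) * Psi_sg s) exp); [|apply continuity_pt_exp].
      apply continuity_pt_mult; [apply continuity_pt_cst | apply continuity_pt_Psi_sg; lra].
    - intros x Hx. assert (HG := Hneg x ltac:(lra)). assert (He := exp_pos ((bexp p - 1) * Psi_sg x)).
      set (E := exp ((bexp p - 1) * Psi_sg x)) in *. set (Gx := G p M x) in *.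
      replace ((-1 / k) * ((bexp p - 1) * (x / Gx) * E)) with (E / (- Gx) * (x * (bexp p - 1) / k))
        by (field; lra).
      rewrite <- (Rmult_1_r (E / - Gx)) at 1. apply Rmult_le_compat_l; [apply Rlt_le, Rdiv_lt_0_compat; lra|].
      unfold k. apply (Rmult_le_reg_r ((bexp p - 1) * phi_mid)); [nra|].
      unfold Rdiv. rewrite Rmult_assoc, Rinv_l by nra. nra. }
  replace (T_sg phi_mid) with 0 in Hinc by (symmetry; apply RInt_same).
  replace (Psi_sg phi_mid) with 0 in Hinc by (symmetry; apply RInt_same).
  rewrite Rmult_0_r, exp_0 in Hinc.
  assert (0 < exp ((bexp p - 1) * Psi_sg t) / k) by (apply Rdiv_lt_0_compat; [apply exp_pos | lra]).
  unfold Rdiv in *. fold k. lra.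
Qed.

Lemma T_sg_le_log t : phi1 < t <= phi_mid ->
  T_sg t <= - (/ L * (ln (phi_mid - phi1) - ln (t - phi1))).
Proof.
  intros Ht. pose proof (lipG_pos p M hp phi2 ltac:(lra)). pose proof (bexp_gt1 p hp).
  assert (Hinc : (/ L * ln (phi_mid - phi1)) - (/ L * ln (t - phi1)) <= T_sg phi_mid - T_sg t).
  { apply (increment_le_of_derive_le (fun x => / L * ln (x - phi1)) T_sg (fun x => / (L * (x - phi1)))
     (fun s => exp ((bexp p - 1) * Psi_sg s) / (- G p M s)) t phi_mid); try lra.
    - intros x Hx. auto_derive; [lra | field; split; lra].
    - intros x Hx. apply is_derive_T_sg; lra.
    - intros x Hx. apply continuity_pt_mult; [apply continuity_pt_cst|].
      apply (continuity_pt_comp (fun x => x - phi1) ln); [|apply continuity_pt_ln; lra].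
      apply continuity_pt_minus; [apply derivable_continuous_pt, derivable_pt_id | apply continuity_pt_cst].
    - intros x Hx. apply continuity_pt_T_sg; lra.
    - intros x Hx. assert (HG := Hneg x ltac:(lra)). assert (HL := neg_G_le_lip_phi1 x ltac:(lra)).
      assert (He : 1 <= exp ((bexp p - 1) * Psi_sg x)).
      { rewrite <- exp_0 at 1. apply exp_le_compat. pose proof (Psi_sg_nonneg x ltac:(lra)).
        apply Rmult_le_pos; lra. }
      unfold Rdiv. apply Rle_trans with (1 * / (- G p M x)).
      + rewrite Rmult_1_l. apply Rinv_le_contravar; lra.
      + apply Rmult_le_compat_r; [apply Rlt_le, Rinv_0_lt_compat|]; lra. }
  unfold T_sg at 1 in Hinc. rewrite RInt_same in Hinc. lra.
Qed.

Lemma T_sg_sup : exists S, (forall t, phi1 < t < phi2 -> T_sg t < S) /\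
   (forall y, y < S -> exists t, phi_mid <= t < phi2 /\ y < T_sg t).
Proof.
  set (E := fun z => exists t, phi_mid <= t < phi2 /\ z = T_sg t).
  assert (HB : bound E) by (exists (/ ((bexp p - 1) * phi_mid)); intros z [t [Ht ->]]; apply T_sg_bounded; auto).
  assert (HE : exists z, E z) by (exists (T_sg phi_mid); exists phi_mid; split; [lra | auto]).
  destruct (completeness E HB HE) as [S [Hub Hlub]].
  exists S. split.
  - intros t Ht. set (t' := (Rmax t phi_mid + phi2) / 2).
    assert (Ht' : t < t' /\ phi_mid <= t' < phi2).
    { unfold t'. pose proof (Rmax_l t phi_mid). pose proof (Rmax_r t phi_mid).
      assert (Rmax t phi_mid < phi2) by (apply Rmax_lub_lt; lra). lra. }
    assert (T_sg t < T_sg t') by (apply T_sg_lt; lra).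
    assert (T_sg t' <= S) by (apply Hub; exists t'; split; [lra | auto]). lra.
  - intros y Hy. apply NNPP. intros Hno.
    assert (S <= y); [|lra]. apply Hlub. intros z [t [Ht ->]].
    destruct (Rle_lt_dec (T_sg t) y) as [|Hlt]; auto. exfalso. apply Hno. exists t; auto.
Qed.

Lemma T_sg_onto_below (S : R) : (forall y, y < S -> exists t, phi_mid <= t < phi2 /\ y < T_sg t) ->
  forall y, y < S -> exists t1 t2, phi1 < t1 /\ t1 < t2 /\ t2 < phi2 /\ T_sg t1 < y /\ y < T_sg t2.
Proof.
  intros HS y Hy. destruct (HS y Hy) as [t2 [Ht2 Hyt2]].
  pose proof (lipG_pos p M hp phi2 ltac:(lra)).
  set (K := Rabs y + 1). assert (HK : 0 < K) by (unfold K; pose proof (Rabs_pos y); lra).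
  set (t1 := phi1 + (phi_mid - phi1) * exp (- L * K)).
  assert (He : 0 < exp (- L * K) < 1).
  { split; [apply exp_pos|]. rewrite <- exp_0. apply exp_increasing. nra. }
  assert (Ht1 : phi1 < t1 < phi_mid) by (unfold t1; split; nra).
  assert (Eln : ln (phi_mid - phi1) - ln (t1 - phi1) = L * K).
  { replace (t1 - phi1) with ((phi_mid - phi1) * exp (- L * K)) by (unfold t1; ring).
    rewrite ln_mult, ln_exp by (try lra; apply exp_pos). ring. }
  assert (Hlow := T_sg_le_log t1 ltac:(lra)). rewrite Eln in Hlow.
  replace (/ L * (L * K)) with K in Hlow by (field; lra).
  assert (- K < y) by (unfold K; pose proof (Rle_abs (- y)); rewrite Rabs_Ropp in *; lra).
  exists t1, t2. repeat split; lra.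
Qed.

Section InverseTime.
Variables (S : R) (k : R -> R).
Hypothesis HS : forall t, phi1 < t < phi2 -> T_sg t < S.
Hypothesis Hk : forall y, y < S -> phi1 < k y < phi2 /\ T_sg (k y) = y.

Definition phi_sg r := k (S - r).

Lemma phi_sg_range r : 0 < r -> phi1 < phi_sg r < phi2.
Proof. intros Hr. apply (Hk (S - r)). lra. Qed.

Lemma T_sg_phi_sg r : 0 < r -> T_sg (phi_sg r) = S - r.
Proof. intros Hr. apply (Hk (S - r)). lra. Qed.

Lemma phi_sg_gt c r : phi1 < c < phi2 -> 0 < r < S - T_sg c -> c < phi_sg r.
Proof.
  intros Hc Hr. pose proof (phi_sg_range r (proj1 Hr)). pose proof (T_sg_phi_sg r (proj1 Hr)).
  destruct (Rle_lt_dec (phi_sg r) c) as [[Hlt | Heq] | Hgt]; auto.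
  - assert (T_sg (phi_sg r) < T_sg c) by (apply T_sg_lt; lra). lra.
  - rewrite Heq in *. lra.
Qed.

Lemma phi_sg_lt c r : phi1 < c < phi2 -> S - T_sg c < r -> phi_sg r < c.
Proof.
  intros Hc Hr. pose proof (HS c Hc).
  pose proof (phi_sg_range r ltac:(lra)). pose proof (T_sg_phi_sg r ltac:(lra)).
  destruct (Rle_lt_dec c (phi_sg r)) as [[Hlt | Heq] | Hgt]; auto.
  - assert (T_sg c < T_sg (phi_sg r)) by (apply T_sg_lt; lra). lra.
  - rewrite <- Heq in *. lra.
Qed.

Lemma is_derive_phi_sg r : 0 < r ->
  is_derive phi_sg r (exp (- (bexp p - 1) * Psi_sg (phi_sg r)) * G p M (phi_sg r)).
Proof.
  intros Hr. assert (Hin := phi_sg_range r Hr). assert (HG := Hneg _ Hin).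
  set (dT := fun t => exp ((bexp p - 1) * Psi_sg t) / (- G p M t)).
  assert (Hkd : is_derive k (S - r) (/ dT (k (S - r)))).
  { apply (is_derive_inverse T_sg dT k phi1 phi2 (fun y => y < S)); try lra.
    - intros t Ht. apply is_derive_T_sg; auto.
    - intros t Ht. apply dT_sg_pos; auto.
    - exact Hk.
    - exists r. split; [lra|]. intros z Hz. apply Rabs_def2 in Hz. lra. }
  eapply is_derive_val; [|apply (is_derive_Rcomp k (fun r => S - r) r _ (-1) Hkd); auto_derive; auto].
  fold (phi_sg r). unfold dT. pose proof (exp_pos ((bexp p - 1) * Psi_sg (phi_sg r))).
  rewrite Ropp_mult_distr_l_reverse, exp_Ropp. field. lra.
Qed.

Lemma phi_sg_cvg_phi2 e : 0 < e -> exists d, 0 < d /\ forall r, 0 < r < d -> Rabs (phi_sg r - phi2) < e.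
Proof.
  intros He. set (e' := Rmin e ((phi2 - phi_mid) / 2)).
  assert (He' : 0 < e' <= e /\ e' < phi2 - phi_mid).
  { unfold e'. split; [split; [apply Rmin_glb_lt | apply Rmin_l] | eapply Rle_lt_trans; [apply Rmin_r|]]; lra. }
  exists (S - T_sg (phi2 - e')). split; [assert (T_sg (phi2 - e') < S) by (apply HS; lra); lra|].
  intros r Hr. pose proof (phi_sg_range r (proj1 Hr)).
  assert (phi2 - e' < phi_sg r) by (apply phi_sg_gt; lra).
  rewrite Rabs_left by lra. lra.
Qed.

Lemma phi_sg_cvg_phi1 e : 0 < e -> exists R0, forall r, R0 < r -> Rabs (phi_sg r - phi1) < e.
Proof.
  intros He. set (e' := Rmin e ((phi_mid - phi1) / 2)).
  assert (He' : 0 < e' <= e /\ e' < phi_mid - phi1).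
  { unfold e'. split; [split; [apply Rmin_glb_lt | apply Rmin_l] | eapply Rle_lt_trans; [apply Rmin_r|]]; lra. }
  exists (Rmax 0 (S - T_sg (phi1 + e'))). intros r Hr.
  assert (Hr0 : 0 < r) by (eapply Rle_lt_trans; [apply Rmax_l | exact Hr]).
  assert (Hr1 : S - T_sg (phi1 + e') < r) by (eapply Rle_lt_trans; [apply Rmax_r | exact Hr]).
  pose proof (phi_sg_range r Hr0).
  assert (phi_sg r < phi1 + e') by (apply phi_sg_lt; lra).
  rewrite Rabs_right by lra. lra.
Qed.

Lemma exp_Psi_sg_cvg_0 e : 0 < e ->
  exists d, 0 < d /\ forall r, 0 < r < d -> exp ((bexp p - 1) * Psi_sg (phi_sg r)) < e.
Proof.
  intros He. pose proof (bexp_gt1 p hp). pose proof (lipG_pos p M hp phi2 ltac:(lra)).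
  set (c := (phi2 - phi_mid) * exp (L * (ln e / (bexp p - 1)) / phi_mid)).
  assert (Hc : 0 < c) by (unfold c; apply Rmult_lt_0_compat; [lra | apply exp_pos]).
  set (eta := Rmin (phi2 - phi_mid) c).
  assert (Heta : 0 < eta /\ eta <= phi2 - phi_mid /\ eta <= c).
  { unfold eta. split; [apply Rmin_glb_lt; lra | split; [apply Rmin_l | apply Rmin_r]]. }
  exists (S - T_sg (phi2 - eta)). split; [assert (T_sg (phi2 - eta) < S) by (apply HS; lra); lra|].
  intros r Hr. pose proof (phi_sg_range r (proj1 Hr)).
  assert (Hgt : phi2 - eta < phi_sg r) by (apply phi_sg_gt; lra).
  rewrite <- (exp_ln e) by auto. apply exp_increasing.
  assert (Hup := Psi_sg_le_log (phi_sg r) ltac:(lra)).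
  assert (Hl : ln (phi2 - phi_sg r) < ln c) by (apply ln_increasing; lra).
  unfold c in Hl. rewrite ln_mult, ln_exp in Hl by (try lra; apply exp_pos).
  assert (Hq : Psi_sg (phi_sg r) < ln e / (bexp p - 1)).
  { eapply Rle_lt_trans; [exact Hup|].
    apply (Rmult_lt_reg_l (L / phi_mid)); [apply Rdiv_lt_0_compat; lra|].
    replace (L / phi_mid * (phi_mid / L * (ln (phi2 - phi_sg r) - ln (phi2 - phi_mid))))
      with (ln (phi2 - phi_sg r) - ln (phi2 - phi_mid)) by (field; lra).
    replace (L / phi_mid * (ln e / (bexp p - 1))) with (L * (ln e / (bexp p - 1)) / phi_mid) by (field; lra).
    lra. }
  apply (Rmult_lt_compat_l (bexp p - 1)) in Hq; [|lra].
  replace ((bexp p - 1) * (ln e / (bexp p - 1))) with (ln e) in Hq by (field; lra). exact Hq.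
Qed.
End InverseTime.

Lemma singular_solution_of_two_roots : exists u, is_pos_sol_0inf p M u /\
  equiv_0 u (U_of p (X_of_phi p phi2)) /\ equiv_infty u (U_of p (X_of_phi p phi1)).
Proof.
  destruct T_sg_sup as [S [HS HSonto]].
  destruct (inverse_exists T_sg phi1 phi2 (fun y => y < S) continuity_pt_T_sg (T_sg_onto_below S HSonto))
    as [k Hk].
  set (I := fun r => 0 < r).
  assert (HI : forall r, I r -> exists d, 0 < d /\ forall s, Rabs (s - r) < d -> I s).
  { intros r Hr. exists r. split; auto. intros s Hs. apply Rabs_def2 in Hs. unfold I in *. lra. }
  assert (Hphi := is_derive_phi_sg S k Hk).
  assert (HPsi : forall r, I r -> is_derive Psi_sg (phi_sg S k r) (phi_sg S k r / G p M (phi_sg S k r)))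
    by (intros r Hr; apply is_derive_Psi_sg, phi_sg_range; auto).
  assert (HG : forall r, I r -> G p M (phi_sg S k r) <> 0)
    by (intros r Hr; assert (G p M (phi_sg S k r) < 0) by (apply Hneg, phi_sg_range; auto); lra).
  set (y := fun r => - Psi_sg (phi_sg S k r)).
  assert (Hy : forall r, 0 < r -> is_derive y r (- phi_sg S k r * exp ((bexp p - 1) * y r))).
  { intros r Hr. unfold y. eapply is_derive_val;
      [|apply (is_derive_opp (fun r => Psi_sg (phi_sg S k r))), (is_derive_Psi_phi p M Psi_sg (phi_sg S k) I);
        auto].
    change (opp (exp (- (bexp p - 1) * Psi_sg (phi_sg S k r)) * phi_sg S k r))
      with (- (exp (- (bexp p - 1) * Psi_sg (phi_sg S k r)) * phi_sg S k r)).
    replace ((bexp p - 1) * - Psi_sg (phi_sg S k r)) with (- (bexp p - 1) * Psi_sg (phi_sg S k r)) by ring.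
    ring. }
  exists (u_traj Psi_sg (phi_sg S k)). split; [|split].
  - intros r Hr. split; [apply exp_pos | split].
    + apply (C2_at_u_traj p M Psi_sg (phi_sg S k) I); auto.
    + apply (solves_at_u_traj p M Psi_sg (phi_sg S k) I); auto.
  - apply (exp_y_equiv_at_right_0 p hp y (phi_sg S k) 1 phi2); try lra.
    + intros r Hr. apply Hy. lra.
    + apply phi_sg_cvg_phi2; auto.
    + intros e He. destruct (exp_Psi_sg_cvg_0 S k HS Hk e He) as [d [Hd Hdd]].
      exists d. split; auto. intros r Hr. unfold y.
      replace (- (bexp p - 1) * - Psi_sg (phi_sg S k r)) with ((bexp p - 1) * Psi_sg (phi_sg S k r)) by ring.
      auto.
  - apply (exp_y_equiv_p_infty p hp y (phi_sg S k) 0 phi1); try lra; auto.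
    apply phi_sg_cvg_phi1; auto.
Qed.
End SingularConstruction.

Lemma singular_solution_exists p M : 1 < p -> M < - mu_star p ->
  exists u, is_pos_sol_0inf p M u /\
    (exists X1, is_X1 p M X1 /\ equiv_0 u (U_of p X1)) /\
    (exists X2, is_X2 p M X2 /\ equiv_infty u (U_of p X2)).
Proof.
  intros hp HM. destruct (two_roots p M hp HM) as [phi1 [phi2 [H12 [G1 [G2 [Hp1 [Hn Hp2]]]]]]].
  destruct (singular_solution_of_two_roots p M phi1 phi2 hp H12 G1 G2 Hn) as [u [Hu [H0 Hinf]]].
  exists u. split; [exact Hu | split].
  - exists (X_of_phi p phi2). split; [apply is_X1_of_last_root; auto; lra | exact H0].
  - exists (X_of_phi p phi1). split; [apply is_X2_of_first_root; auto; lra | exact Hinf].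
Qed.

Theorem theorem4p19 (p M : R) (hp : 1 < p) :
  ((exists u : R -> R, is_ground_state p M u) <-> M <= - mu_star p) /\
  (forall u : R -> R, is_ground_state p M u ->
     exists X2, is_X2 p M X2 /\ equiv_infty u (U_of p X2)) /\
  (M < - mu_star p ->
     exists u : R -> R, is_pos_sol_0inf p M u /\
       (exists X1, is_X1 p M X1 /\ equiv_0 u (U_of p X1)) /\
       (exists X2, is_X2 p M X2 /\ equiv_infty u (U_of p X2))).
Proof.
  split; [split | split].
  - intros [u Hu]. exact (ground_state_M_le p M u hp Hu).
  - exact (ground_state_exists p M hp).
  - intros u Hu. exact (ground_state_equiv_infty p M u hp Hu).
  - exact (singular_solution_exists p M hp).
Qed.
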